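(* The discard categories $\mathbf{CPM}$ and $\mathbf{UCPM}$ are pseudo-purifiable. Moreover, in each of them, every purification is a pseudo-purification: if $f\in\mathcal C(A,B)$ and $p\in\mathcal C(A,B\otimes X)$ is pure with $f=(\mathrm{id}_B\otimes\top_X)\circ p$, then $p\in\mathrm{Pure}(f)$.
   Context: $\mathbf{CPM}$: objects are the matrix algebras $\mathcal M_{2^n\times2^n}(\mathbb C)$ ($n$ qubits), morphisms are completely positive linear maps, monoidal product is the tensor product, symmetry is the swap $\rho\otimes\nu\mapsto\nu\otimes\rho$, and the discard is the trace $\top:\rho\mapsto\mathrm{Tr}(\rho)$. $\mathbf{UCPM}$ is the subcategory of trace-preserving completely positive maps (with the same discard). A morphism is pure if it has the form $\rho\mapsto V\rho V^\dagger$ for a complex matrix $V$. A purification of $f$ is a pure $p$ with $f=(\mathrm{id}\otimes\top)\circ p$. A discard category is a symmetric monoidal category with, for each object $A$, a morphism $\top_A:A\to I$ with $\top_I=\mathrm{id}_I$ and $\top_{A\otimes B}=\top_A\otimes\top_B$; $f:A\to B$ is causal if $\top_B\circ f=\top_A$. A morphism $p\in\mathcal C(A,B\otimes X)$ is a pseudo-purification of $f\in\mathcal C(A,B)$, written $p\in\mathrm{Pure}(f)$, if for every object $Y$ and every $g\in\mathcal C(A,B\otimes Y)$ with $f=(\mathrm{id}_B\otimes\top_Y)\circ g$ there is a causal $c\in\mathcal C(X,Y)$ with $g=(\mathrm{id}_B\otimes c)\circ p$. The category is pseudo-purifiable if every morphism has a pseudo-purification and, for all $f_1\in\mathcal C(A_1,B_1\otimes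 C)$, $f_2\in\mathcal C(C\otimes A_2,B_2)$, $p_1\in\mathrm{Pure}(f_1)$ with $p_1:A_1\to B_1\otimes C\otimes X_1$ and $p_2\in\mathrm{Pure}(f_2)$ with $p_2:C\otimes A_2\to B_2\otimes X_2$, the morphism $(\mathrm{id}_{B_1\otimes B_2}\otimes\sigma_{X_2,X_1})\circ(\mathrm{id}_{B_1}\otimes p_2\otimes\mathrm{id}_{X_1})\circ(\mathrm{id}_{B_1\otimes C}\otimes\sigma_{X_1,A_2})\circ(p_1\otimes\mathrm{id}_{A_2})$ is a pseudo-purification of $(\mathrm{id}_{B_1}\otimes f_2)\circ(f_1\otimes\mathrm{id}_{A_2})$. *)

From HB Require Import structures.
From mathcomp Require Import all_boot all_order all_algebra.
From mathcomp Require Import mxtens complex.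
From mathcomp Require Import reals.

Set Implicit Arguments.
Unset Strict Implicit.
Unset Printing Implicit Defensive.

Import GRing.Theory Num.Theory.

Section CPMdefs.
Variable C : numClosedFieldType.

Definition mxadj m n (A : 'M[C]_(m, n)) : 'M[C]_(n, m) := (map_mx Num.conj A)^T.

Definition psd d (A : 'M[C]_d) : Prop :=
  forall v : 'cV[C]_d, (0 <= (mxadj v *m A *m v) 0 0)%R.

Definition linmap p q (f : 'M[C]_p -> 'M[C]_q) : Prop :=
  forall (a : C) x y, (f (a *: x + y) = a *: f x + f y)%R.

(* tensor product f (x) g of (linear) maps on matrix algebras, Kronecker
   convention of mxtens (index (i,k) |-> i * p2 + k):
   (f (x) g)(rho) = sum rho_{(i,k),(j,l)} f(E_ij) (x) g(E_kl). *)
Definition tmap p1 q1 p2 q2 (f : 'M[C]_p1 -> 'M[C]_q1) (g : 'M[C]_p2 -> 'M[C]_q2)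
  (rho : 'M[C]_(p1 * p2)) : 'M[C]_(q1 * q2) :=
  (\sum_(i < p1) \sum_(j < p1) \sum_(k < p2) \sum_(l < p2)
     rho (mxtens_index (i, k)) (mxtens_index (j, l)) *:
       (f (delta_mx i j) *t g (delta_mx k l)))%R.

Definition rswap p q (rho : 'M[C]_(p * q)) : 'M[C]_(q * p) :=
  (\sum_(i < p) \sum_(j < p) \sum_(k < q) \sum_(l < q)
     rho (mxtens_index (i, k)) (mxtens_index (j, l)) *:
       (delta_mx k l *t delta_mx i j))%R.

Definition completely_positive p q (f : 'M[C]_p -> 'M[C]_q) : Prop :=
  forall k (A : 'M[C]_(k * p)), psd A -> psd (tmap (@idfun 'M[C]_k) f A).

(* ---- the categories: object n = n qubits = 'M_(2^n) ---- *)
Local Notation Mx n := 'M[C]_(2 ^ n).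

Definition mor_pred := forall n m : nat, (Mx n -> Mx m) -> Prop.

Definition CPM : mor_pred := fun n m f => linmap f /\ completely_positive f.

Definition trace_preserving n m (f : Mx n -> Mx m) : Prop :=
  forall rho, (\tr (f rho) = \tr rho)%R.

Definition UCPM : mor_pred := fun n m f => CPM f /\ trace_preserving f.

(* identifying 'M_(2^n) and 'M_(2^n') along n = n' (associators/unitors) *)
Definition qcast n n' (e : n = n') (rho : Mx n) : Mx n' :=
  castmx (congr1 (expn 2) e, congr1 (expn 2) e) rho.

Definition ttens n1 m1 n2 m2 (f : Mx n1 -> Mx m1) (g : Mx n2 -> Mx m2)
  (rho : Mx (n1 + n2)) : Mx (m1 + m2) :=
  castmx (esym (expnD 2 m1 m2), esym (expnD 2 m1 m2))
    (tmap f g (castmx (expnD 2 n1 n2, expnD 2 n1 n2) rho)).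

Definition qswap a b (rho : Mx (a + b)) : Mx (b + a) :=
  castmx (esym (expnD 2 b a), esym (expnD 2 b a))
    (rswap (castmx (expnD 2 a b, expnD 2 a b) rho)).

Definition disc n (rho : Mx n) : Mx 0 := ((\tr rho)%:M)%R.

Definition ptr b y (rho : Mx (b + y)) : Mx b :=
  qcast (addn0 b) (ttens (@idfun (Mx b)) (@disc y) rho).

Definition causal n m (c : Mx n -> Mx m) : Prop :=
  forall rho, disc (c rho) = disc rho.

Definition pure n m (p : Mx n -> Mx m) : Prop :=
  exists V : 'M[C]_(2 ^ m, 2 ^ n), forall rho, (p rho = V *m rho *m mxadj V)%R.

(* p \in Pure(f) in the discard category with morphisms M *)
Definition pseudo_pur (M : mor_pred) a b x (f : Mx a -> Mx b)
  (p : Mx a -> Mx (b + x)) : Prop :=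
  M _ _ p /\
  forall y (g : Mx a -> Mx (b + y)), M _ _ g ->
    (forall rho, f rho = ptr (g rho)) ->
    exists c : Mx x -> Mx y,
      M _ _ c /\ causal c /\ forall rho, g rho = ttens (@idfun (Mx b)) c (p rho).

Lemma eq_assoc1 b1 c a2 x1 : b1 + c + (a2 + x1) = b1 + (c + a2) + x1.
Proof. by rewrite !addnA. Qed.

Lemma eq_assoc2 b1 b2 x2 x1 : b1 + (b2 + x2) + x1 = b1 + b2 + (x2 + x1).
Proof. by rewrite !addnA. Qed.

Definition seq_comp a1 b1 c a2 b2 (f1 : Mx a1 -> Mx (b1 + c))
  (f2 : Mx (c + a2) -> Mx b2) (rho : Mx (a1 + a2)) : Mx (b1 + b2) :=
  ttens (@idfun (Mx b1)) f2
    (qcast (esym (addnA b1 c a2)) (ttens f1 (@idfun (Mx a2)) rho)).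

(* (id (x) sigma_{X2,X1}) o (id_B1 (x) p2 (x) id_X1)
     o (id_{B1 (x) C} (x) sigma_{X1,A2}) o (p1 (x) id_A2) *)
Definition seq_comp_pur a1 b1 c a2 b2 x1 x2
  (p1 : Mx a1 -> Mx (b1 + c + x1)) (p2 : Mx (c + a2) -> Mx (b2 + x2))
  (rho : Mx (a1 + a2)) : Mx (b1 + b2 + (x1 + x2)) :=
  let s1 := ttens p1 (@idfun (Mx a2)) rho in
  let s2 := qcast (esym (addnA (b1 + c) x1 a2)) s1 in
  let s3 := ttens (@idfun (Mx (b1 + c))) (@qswap x1 a2) s2 in
  let s4 := qcast (eq_assoc1 b1 c a2 x1) s3 in
  let s5 := ttens (ttens (@idfun (Mx b1)) p2) (@idfun (Mx x1)) s4 in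
  let s6 := qcast (eq_assoc2 b1 b2 x2 x1) s5 in
  ttens (@idfun (Mx (b1 + b2))) (@qswap x2 x1) s6.

Definition pseudo_purifiable (M : mor_pred) : Prop :=
  (forall a b (f : Mx a -> Mx b), M _ _ f ->
     exists x (p : Mx a -> Mx (b + x)), pseudo_pur M f p) /\
  (forall a1 b1 c a2 b2 x1 x2 (f1 : Mx a1 -> Mx (b1 + c))
      (f2 : Mx (c + a2) -> Mx b2)
      (p1 : Mx a1 -> Mx (b1 + c + x1)) (p2 : Mx (c + a2) -> Mx (b2 + x2)),
     M _ _ f1 -> M _ _ f2 -> pseudo_pur M f1 p1 -> pseudo_pur M f2 p2 ->
     pseudo_pur M (seq_comp f1 f2) (seq_comp_pur p1 p2)).

Definition purifications_pseudo (M : mor_pred) : Prop :=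
  forall a b x (f : Mx a -> Mx b) (p : Mx a -> Mx (b + x)),
    M _ _ f -> M _ _ p -> pure p -> (forall rho, f rho = ptr (p rho)) ->
    pseudo_pur M f p.

End CPMdefs.

From HB Require Import structures.
From mathcomp Require Import all_boot all_order all_algebra.
From mathcomp Require Import mxtens complex.
From mathcomp Require Import reals.
From mathcomp Require Import ring.
From mathcomp Require Import spectral.

Set Implicit Arguments.
Unset Strict Implicit.
Unset Printing Implicit Defensive.

Import GRing.Theory Num.Theory.
Local Open Scope ring_scope.

(* Pseudo-purifiability of CPM and UCPM, via Stinespring dilations and the
   unitary freedom of purifications, over any numerically closed field C.
   - Choi–Kraus: a completely positive map is a Kraus map, obtained by
     factoring its (positive semidefinite) Choi matrix as [B B^*]; hence it
     is the marginal of a pure map [rho |-> V rho V^*] ([purify]).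
   - Freedom: [A A^* = B B^*] forces [B = A T] with [T T^*] a projector
     fixing [A] ([freedom]).  Applied to reshapings of [V] and of the Kraus
     operators of a CP map [g] with the same marginal, it writes [g] as a
     trace-preserving Kraus map applied to the environment of [V rho V^*]
     ([pure_factor]): purifications are pseudo-purifications.
   - Composition: [seq_comp_pur] of two dilations is a purification of
     [seq_comp], and its naturality in the environments transports the
     factorization to arbitrary pseudo-purifications.
   These last steps hold for any class of CP maps with suitable closure
   properties (section [PseudoPurification]), instantiated to CPM and UCPM. *)

Section LinearMaps.
Variable C : numClosedFieldType.

Section Linmap.
Variables (p q : nat) (f : 'M[C]_p -> 'M[C]_q).
Hypothesis lf : linmap f.

Lemma lin0 : f 0 = 0.
Proof.
have h := lf 1 0 0; rewrite !scale1r addr0 in h.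
by apply: (addrI (f 0)); rewrite addr0 -h.
Qed.

Lemma linD x y : f (x + y) = f x + f y.
Proof. by rewrite -{1}[x]scale1r lf scale1r. Qed.

Lemma linZ a x : f (a *: x) = a *: f x.
Proof. by rewrite -[a *: x]addr0 lf lin0 addr0. Qed.

Lemma lin_sum I (r : seq I) (P : pred I) (F : I -> 'M[C]_p) :
  f (\sum_(i <- r | P i) F i) = \sum_(i <- r | P i) f (F i).
Proof. exact: (big_morph f linD lin0). Qed.

Lemma lin_delta_expand x :
  f x = \sum_i \sum_j x i j *: f (delta_mx i j).
Proof.
rewrite {1}(matrix_sum_delta x) lin_sum; apply: eq_bigr => i _.
by rewrite lin_sum; apply: eq_bigr => j _; rewrite linZ.
Qed.

End Linmap.

Lemma lin_id p : linmap (@idfun 'M[C]_p).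
Proof. by []. Qed.

Lemma lin_comp p q r (f : 'M[C]_p -> 'M[C]_q) (g : 'M[C]_q -> 'M[C]_r) :
  linmap f -> linmap g -> linmap (fun x => g (f x)).
Proof. by move=> lf lg a x y; rewrite lf lg. Qed.

Lemma lin_castmx p p' (e : p = p') : linmap (castmx (e, e) : 'M[C]_p -> 'M[C]_p').
Proof. by move=> a x y; apply/matrixP=> i j; rewrite !(castmxE, mxE). Qed.

Lemma lin_conj p q (V : 'M[C]_(q, p)) : linmap (fun rho => V *m rho *m mxadj V).
Proof. by move=> a x y; rewrite mulmxDr mulmxDl -scalemxAr -scalemxAl. Qed.

End LinearMaps.

Section Kronecker.
Variable C : numClosedFieldType.

Section Bilinear.
Variables m n p q : nat.

Lemma tensmxDl (A A' : 'M[C]_(m, n)) (B : 'M[C]_(p, q)) :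
  (A + A') *t B = A *t B + A' *t B.
Proof. by apply/matrixP=> i j; rewrite !mxE mulrDl. Qed.

Lemma tensmxDr (A : 'M[C]_(m, n)) (B B' : 'M[C]_(p, q)) :
  A *t (B + B') = A *t B + A *t B'.
Proof. by apply/matrixP=> i j; rewrite !mxE mulrDr. Qed.

Lemma tensmxZl a (A : 'M[C]_(m, n)) (B : 'M[C]_(p, q)) :
  (a *: A) *t B = a *: (A *t B).
Proof. by apply/matrixP=> i j; rewrite !mxE mulrA. Qed.

Lemma tensmxZr a (A : 'M[C]_(m, n)) (B : 'M[C]_(p, q)) :
  A *t (a *: B) = a *: (A *t B).
Proof. by apply/matrixP=> i j; rewrite !mxE mulrCA. Qed.

Lemma tensmx_suml I (r : seq I) (P : pred I) (F : I -> 'M[C]_(m, n))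
  (B : 'M[C]_(p, q)) :
  (\sum_(i <- r | P i) F i) *t B = \sum_(i <- r | P i) (F i *t B).
Proof.
exact: (big_morph (fun A => A *t B) (fun x y => tensmxDl x y B) (tens0mx B)).
Qed.

Lemma tensmx_sumr I (r : seq I) (P : pred I) (F : I -> 'M[C]_(p, q))
  (A : 'M[C]_(m, n)) :
  A *t (\sum_(i <- r | P i) F i) = \sum_(i <- r | P i) (A *t F i).
Proof.
exact: (big_morph (fun B => A *t B) (fun x y => tensmxDr A x y) (tensmx0 A)).
Qed.

End Bilinear.

Lemma tensmx_sum4 m1 n1 m2 n2 p1 q1 p2 q2
  (a : 'I_m1 -> 'I_n1 -> C) (b : 'I_m2 -> 'I_n2 -> C)
  (F : 'I_m1 -> 'I_n1 -> 'M[C]_(p1, q1)) (G : 'I_m2 -> 'I_n2 -> 'M[C]_(p2, q2)) :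
  \sum_i \sum_j \sum_k \sum_l (a i j * b k l) *: (F i j *t G k l) =
  (\sum_i \sum_j a i j *: F i j) *t (\sum_k \sum_l b k l *: G k l).
Proof.
rewrite tensmx_suml; apply: eq_bigr=> i _.
rewrite tensmx_suml; apply: eq_bigr=> j _.
rewrite tensmxZl tensmx_sumr scaler_sumr; apply: eq_bigr=> k _.
rewrite tensmx_sumr scaler_sumr; apply: eq_bigr=> l _.
by rewrite tensmxZr scalerA.
Qed.

Lemma tensmx_sum4_swap m1 n1 m2 n2 p1 q1 p2 q2
  (a : 'I_m1 -> 'I_n1 -> C) (b : 'I_m2 -> 'I_n2 -> C)
  (F : 'I_m1 -> 'I_n1 -> 'M[C]_(p1, q1)) (G : 'I_m2 -> 'I_n2 -> 'M[C]_(p2, q2)) :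
  \sum_i \sum_j \sum_k \sum_l (a i j * b k l) *: (G k l *t F i j) =
  (\sum_k \sum_l b k l *: G k l) *t (\sum_i \sum_j a i j *: F i j).
Proof.
rewrite tensmx_sumr; apply: eq_bigr=> i _.
rewrite tensmx_sumr; apply: eq_bigr=> j _.
rewrite tensmxZr tensmx_suml scaler_sumr; apply: eq_bigr=> k _.
rewrite tensmx_suml scaler_sumr; apply: eq_bigr=> l _.
by rewrite tensmxZl scalerA mulrC.
Qed.

Lemma mxtens_index_eq a b (x : 'I_a) (y : 'I_b) (z : 'I_a) (w : 'I_b) :
  (mxtens_index (x, y) == mxtens_index (z, w)) = (x == z) && (y == w).
Proof.
apply/eqP/andP=> [|[/eqP-> /eqP->]//].
by move/(congr1 (@mxtens_unindex a b)); rewrite !mxtens_indexK => -[-> ->].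
Qed.

Lemma sum_mxtens m n (F : 'I_(m * n) -> C) :
  \sum_w F w = \sum_i \sum_k F (mxtens_index (i, k)).
Proof.
rewrite pair_big /= (reindex (fun p : 'I_m * 'I_n => mxtens_index (p.1, p.2))) //=.
exists (fun r => mxtens_unindex r) => [[i k] _|r _]; first by rewrite mxtens_indexK.
by rewrite -surjective_pairing mxtens_unindexK.
Qed.

Lemma delta_mxtens m n (i j : 'I_m) (k l : 'I_n) :
  delta_mx (mxtens_index (i, k)) (mxtens_index (j, l)) =
  delta_mx i j *t (delta_mx k l : 'M[C]_n).
Proof.
apply/matrixP=> r s; case: (mxtens_indexP r)=> i' k'; case: (mxtens_indexP s)=> j' l'.
rewrite tensmxE !mxE !mxtens_index_eq.
by case: (i' == i); case: (k' == k); case: (j' == j); case: (l' == l);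
  rewrite /= ?mulr1 ?mulr0 ?mul0r.
Qed.

Lemma lin_ext_mxtens m n q (F G : 'M[C]_(m * n) -> 'M[C]_q) :
  linmap F -> linmap G -> (forall A B, F (A *t B) = G (A *t B)) ->
  forall M, F M = G M.
Proof.
move=> lF lG h M; rewrite (lin_delta_expand lF) (lin_delta_expand lG).
apply: eq_bigr=> r _; apply: eq_bigr=> s _; congr (_ *: _).
by case: (mxtens_indexP r)=> i k; case: (mxtens_indexP s)=> j l; rewrite delta_mxtens h.
Qed.

Lemma tmap_tens p1 q1 p2 q2 (f : 'M[C]_p1 -> 'M[C]_q1) (g : 'M[C]_p2 -> 'M[C]_q2)
  (A : 'M[C]_p1) (B : 'M[C]_p2) :
  linmap f -> linmap g -> tmap f g (A *t B) = f A *t g B.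
Proof.
move=> lf lg; rewrite (lin_delta_expand lf) (lin_delta_expand lg) -tensmx_sum4.
apply: eq_bigr=> i _; apply: eq_bigr=> j _.
by apply: eq_bigr=> k _; apply: eq_bigr=> l _; rewrite tensmxE.
Qed.

Lemma rswap_tens p1 p2 (A : 'M[C]_p1) (B : 'M[C]_p2) :
  rswap (A *t B) = B *t A.
Proof.
rewrite /rswap {2}(matrix_sum_delta A) {2}(matrix_sum_delta B) -tensmx_sum4_swap.
apply: eq_bigr=> i _; apply: eq_bigr=> j _.
by apply: eq_bigr=> k _; apply: eq_bigr=> l _; rewrite tensmxE.
Qed.

Lemma lin_tmap p1 q1 p2 q2 (f : 'M[C]_p1 -> 'M[C]_q1) (g : 'M[C]_p2 -> 'M[C]_q2) :
  linmap (tmap f g).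
Proof.
move=> a x y; rewrite /tmap scaler_sumr -big_split; apply: eq_bigr=> i _.
rewrite scaler_sumr -big_split; apply: eq_bigr=> j _.
rewrite scaler_sumr -big_split; apply: eq_bigr=> k _.
rewrite scaler_sumr -big_split; apply: eq_bigr=> l _.
by rewrite !mxE scalerDl scalerA.
Qed.

Lemma lin_rswap p1 p2 : linmap (@rswap C p1 p2).
Proof.
move=> a x y; rewrite /rswap scaler_sumr -big_split; apply: eq_bigr=> i _.
rewrite scaler_sumr -big_split; apply: eq_bigr=> j _.
rewrite scaler_sumr -big_split; apply: eq_bigr=> k _.
rewrite scaler_sumr -big_split; apply: eq_bigr=> l _.
by rewrite !mxE scalerDl scalerA.
Qed.

Lemma tmap_ext p1 q1 p2 q2 (f f' : 'M[C]_p1 -> 'M[C]_q1) (g g' : 'M[C]_p2 -> 'M[C]_q2) :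
  f =1 f' -> g =1 g' -> tmap f g =1 tmap f' g'.
Proof.
move=> ef eg M; apply: eq_bigr=> i _; apply: eq_bigr=> j _.
by apply: eq_bigr=> k _; apply: eq_bigr=> l _; rewrite ef eg.
Qed.

End Kronecker.

Section Adjoint.
Variable C : numClosedFieldType.

Lemma mxadjE m n (A : 'M[C]_(m, n)) i j : mxadj A i j = (A j i)^*.
Proof. by rewrite !mxE. Qed.

Lemma mxadjM m n p (A : 'M[C]_(m, n)) (B : 'M[C]_(n, p)) :
  mxadj (A *m B) = mxadj B *m mxadj A.
Proof. by rewrite /mxadj map_mxM trmx_mul. Qed.

Lemma mxadjD m n (A B : 'M[C]_(m, n)) : mxadj (A + B) = mxadj A + mxadj B.
Proof. by apply/matrixP=> i j; rewrite !mxE rmorphD. Qed.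

Lemma mxadjN m n (A : 'M[C]_(m, n)) : mxadj (- A) = - mxadj A.
Proof. by apply/matrixP=> i j; rewrite !mxE rmorphN. Qed.

Lemma mxadjB m n (A B : 'M[C]_(m, n)) : mxadj (A - B) = mxadj A - mxadj B.
Proof. by rewrite mxadjD mxadjN. Qed.

Lemma mxadjZ m n a (A : 'M[C]_(m, n)) : mxadj (a *: A) = a^* *: mxadj A.
Proof. by apply/matrixP=> i j; rewrite !mxE rmorphM. Qed.

Lemma mxadj0 m n : mxadj (0 : 'M[C]_(m, n)) = 0.
Proof. by apply/matrixP=> i j; rewrite !mxE rmorph0. Qed.

Lemma mxadj_sum m n I (r : seq I) (P : pred I) (F : I -> 'M[C]_(m, n)) :
  mxadj (\sum_(i <- r | P i) F i) = \sum_(i <- r | P i) mxadj (F i).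
Proof. exact: (big_morph _ (@mxadjD m n) (mxadj0 m n)). Qed.

Lemma mxadjK m n (A : 'M[C]_(m, n)) : mxadj (mxadj A) = A.
Proof. by apply/matrixP=> i j; rewrite !mxE conjCK. Qed.

Lemma mxadj1 m : mxadj (1%:M : 'M[C]_m) = 1%:M.
Proof. by apply/matrixP=> i j; rewrite !mxE eq_sym rmorph_nat. Qed.

Lemma mxadj_delta m n (i : 'I_m) (j : 'I_n) :
  mxadj (delta_mx i j : 'M[C]_(m, n)) = delta_mx j i.
Proof. by apply/matrixP=> r s; rewrite !mxE rmorph_nat andbC. Qed.

Lemma mxadj_tens m n p q (A : 'M[C]_(m, n)) (B : 'M[C]_(p, q)) :
  mxadj (A *t B) = mxadj A *t mxadj B.
Proof.
apply/matrixP=> r s; case: (mxtens_indexP r)=> i k; case: (mxtens_indexP s)=> j l.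
by rewrite mxadjE !tensmxE !mxadjE rmorphM.
Qed.

Lemma mxadj_cast m n m' n' (e1 : m = m') (e2 : n = n') (A : 'M[C]_(m, n)) :
  mxadj (castmx (e1, e2) A) = castmx (e2, e1) (mxadj A).
Proof. by case: m' / e1; case: n' / e2; rewrite !castmx_id. Qed.

Lemma mxadj_diag_ge0 n (d : 'rV[C]_n) :
  (forall x, 0 <= d 0 x) -> mxadj (diag_mx d) = diag_mx d.
Proof.
move=> hd; apply/matrixP=> i j; rewrite mxadjE !mxE eq_sym rmorphMn /=.
by case: eqP => [->|]; rewrite ?mulr0n // mulr1n geC0_conj.
Qed.

(* [M M^*] vanishes only for [M = 0]: its diagonal entries are sums of
   squared moduli. *)
Lemma mulmx_adj_eq0 m n (M : 'M[C]_(m, n)) : M *m mxadj M = 0 -> M = 0.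
Proof.
move=> h; apply/matrixP=> i k; rewrite mxE.
have /matrixP/(_ i i) := h; rewrite !mxE => h'.
have nn : forall j, xpredT j -> 0 <= M i j * mxadj M j i.
  by move=> j _; rewrite mxadjE mul_conjC_ge0.
have := @psumr_eq0P _ _ _ _ nn h' k isT.
by rewrite mxadjE => /eqP; rewrite mulf_eq0 conjC_eq0 orbb => /eqP.
Qed.

Lemma mul_castmx m n p m' n' p' (e1 : m = m') (e2 : n = n') (e3 : p = p')
  (A : 'M[C]_(m, n)) (B : 'M[C]_(n, p)) :
  castmx (e1, e2) A *m castmx (e2, e3) B = castmx (e1, e3) (A *m B).
Proof. by case: m' / e1; case: n' / e2; case: p' / e3; rewrite !castmx_id. Qed.

Lemma mxtrace_castmx m m' (e : m = m') (A : 'M[C]_m) : \tr (castmx (e, e) A) = \tr A.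
Proof. by case: m' / e; rewrite castmx_id. Qed.

Lemma mul_delta_entry m n p q (A : 'M[C]_(m, n)) (B : 'M[C]_(p, q)) i j k l :
  (A *m delta_mx i j *m B) k l = A k i * B j l.
Proof.
rewrite -(mul_delta_mx (0 : 'I_1)) mulmxA -colE -mulmxA -rowE.
by rewrite !mxE big_ord1 !mxE.
Qed.

End Adjoint.


Section Qubits.
Variable C : numClosedFieldType.
Local Notation Mx n := 'M[C]_(2 ^ n).

Definition tens n m (A : Mx n) (B : Mx m) : Mx (n + m) :=
  castmx (esym (expnD 2 n m), esym (expnD 2 n m)) (A *t B).

Definition ti n m (i : 'I_(2 ^ n)) (k : 'I_(2 ^ m)) : 'I_(2 ^ (n + m)) :=
  cast_ord (esym (expnD 2 n m)) (mxtens_index (i, k)).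

Definition unti n m (r : 'I_(2 ^ (n + m))) : 'I_(2 ^ n) * 'I_(2 ^ m) :=
  mxtens_unindex (cast_ord (expnD 2 n m) r).

Lemma unti_ti n m i k : unti (@ti n m i k) = (i, k).
Proof. by rewrite /unti /ti cast_ordKV mxtens_indexK. Qed.

Lemma eq_ti n m i k j l : (@ti n m i k == ti j l) = (i == j) && (k == l).
Proof.
apply/eqP/andP=> [/(congr1 (@unti n m))|[/eqP-> /eqP->]//].
by rewrite !unti_ti => -[-> ->].
Qed.

Variant ti_spec n m : 'I_(2 ^ (n + m)) -> Type :=
  TiSpec (i : 'I_(2 ^ n)) (k : 'I_(2 ^ m)) : ti_spec (ti i k).

Lemma tiP n m r : @ti_spec n m r.
Proof.
have -> : r = ti (unti r).1 (unti r).2.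
  by rewrite /ti /unti -surjective_pairing mxtens_unindexK cast_ordK.
by constructor.
Qed.

Lemma tens_E n m (A : Mx n) (B : Mx m) i j k l :
  tens A B (ti i k) (ti j l) = A i j * B k l.
Proof. by rewrite /tens castmxE /ti !cast_ordK tensmxE. Qed.

Lemma sum_ti n m (F : 'I_(2 ^ (n + m)) -> C) :
  \sum_r F r = \sum_i \sum_k F (@ti n m i k).
Proof.
rewrite (reindex (cast_ord (esym (expnD 2 n m)))) /=; last first.
  by exists (cast_ord (expnD 2 n m)) => r _; [exact: cast_ordKV|exact: cast_ordK].
exact: sum_mxtens.
Qed.

Lemma lin_ext n m q (F G : Mx (n + m) -> 'M[C]_q) :
  linmap F -> linmap G -> (forall A B, F (tens A B) = G (tens A B)) ->
  forall M, F M = G M.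
Proof.
move=> lF lG h M; pose e := expnD 2 n m.
have eM : M = castmx (esym e, esym e) (castmx (e, e) M) by rewrite castmxK.
rewrite eM; move: (castmx _ M); apply: lin_ext_mxtens => //.
- by apply: lin_comp lF; apply: lin_castmx.
- by apply: lin_comp lG; apply: lin_castmx.
Qed.

Lemma lin_tensl n m (B : Mx m) : linmap (fun A : Mx n => tens A B).
Proof.
move=> a x y; apply/matrixP=> r s; case: (tiP r)=> i k; case: (tiP s)=> j l.
by rewrite !(mxE, tens_E) mulrDl mulrA.
Qed.

Lemma lin_tensr n m (A : Mx n) : linmap (fun B : Mx m => tens A B).
Proof.
move=> a x y; apply/matrixP=> r s; case: (tiP r)=> i k; case: (tiP s)=> j l.
by rewrite !(mxE, tens_E) mulrDr mulrCA.
Qed.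

Lemma ttens_tens n1 m1 n2 m2 (f : Mx n1 -> Mx m1) (g : Mx n2 -> Mx m2) A B :
  linmap f -> linmap g -> ttens f g (tens A B) = tens (f A) (g B).
Proof. by move=> lf lg; rewrite /ttens /tens castmxKV tmap_tens. Qed.

Lemma qswap_tens a b (A : Mx a) (B : Mx b) : qswap (tens A B) = tens B A.
Proof. by rewrite /qswap /tens castmxKV rswap_tens. Qed.

Lemma tr_tens n m (A : Mx n) (B : Mx m) : \tr (tens A B) = \tr A * \tr B.
Proof.
rewrite /mxtrace sum_ti mulr_suml; apply: eq_bigr=> i _.
by rewrite mulr_sumr; apply: eq_bigr=> k _; rewrite tens_E.
Qed.

Lemma lin_ttens n1 m1 n2 m2 (f : Mx n1 -> Mx m1) (g : Mx n2 -> Mx m2) :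
  linmap (ttens f g).
Proof.
by move=> a x y; rewrite /ttens (lin_castmx _ a) lin_tmap -(lin_castmx _ a).
Qed.

Lemma lin_qcast n n' (e : n = n') : linmap (@qcast C n n' e).
Proof. exact: lin_castmx. Qed.

Lemma lin_qswap a b : linmap (@qswap C a b).
Proof.
by move=> c x y; rewrite /qswap (lin_castmx _ c) lin_rswap -(lin_castmx _ c).
Qed.

Lemma lin_disc n : linmap (@disc C n).
Proof.
move=> a x y; rewrite /disc mxtraceD mxtraceZ.
by apply/matrixP=> i j; rewrite !mxE mulrnDl mulrnAr.
Qed.

Lemma lin_ptr b y : linmap (@ptr C b y).
Proof. by move=> a x z; rewrite /ptr lin_ttens lin_qcast. Qed.

Lemma qcast_E n n' (e : n = n') (M : Mx n) r s :
  qcast e M r s = M (cast_ord (esym (congr1 (expn 2) e)) r)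
                    (cast_ord (esym (congr1 (expn 2) e)) s).
Proof. by rewrite /qcast castmxE. Qed.

Ltac index_eq := apply: val_inj => /=; rewrite ?expnD; ring.

Lemma qcast_assoc n m k (e : (n + m + k = n + (m + k))%N)
  (A : Mx n) (B : Mx m) (D : Mx k) :
  qcast e (tens (tens A B) D) = tens A (tens B D).
Proof.
apply/matrixP=> r s; case: (tiP r)=> i r'; case: (tiP r')=> j l.
case: (tiP s)=> i' s'; case: (tiP s')=> j' l'.
have E x y z E' : cast_ord E' (@ti n (m + k) x (ti y z)) = ti (ti x y) z by index_eq.
by rewrite qcast_E !E !tens_E mulrA.
Qed.

Lemma qcast_assoc1 b1 c a2 x1 (e : (b1 + c + (a2 + x1) = b1 + (c + a2) + x1)%N)
  (B : Mx b1) (Cm : Mx c) (A2 : Mx a2) (X : Mx x1) :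
  qcast e (tens (tens B Cm) (tens A2 X)) = tens (tens B (tens Cm A2)) X.
Proof.
apply/matrixP=> r s; case: (tiP r)=> r1 l; case: (tiP r1)=> i r2; case: (tiP r2)=> j k.
case: (tiP s)=> s1 l'; case: (tiP s1)=> i' s2; case: (tiP s2)=> j' k'.
have E x y z w E' : cast_ord E' (@ti (b1 + (c + a2)) x1 (ti x (ti y z)) w) =
   ti (ti x y) (ti z w) by index_eq.
by rewrite qcast_E !E !tens_E !mulrA.
Qed.

Lemma qcast_assoc2 b1 b2 x2 x1 (e : (b1 + (b2 + x2) + x1 = b1 + b2 + (x2 + x1))%N)
  (B : Mx b1) (B2 : Mx b2) (X2 : Mx x2) (X : Mx x1) :
  qcast e (tens (tens B (tens B2 X2)) X) = tens (tens B B2) (tens X2 X).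
Proof.
apply/matrixP=> r s; case: (tiP r)=> r1 r2; case: (tiP r1)=> i j; case: (tiP r2)=> k l.
case: (tiP s)=> s1 s2; case: (tiP s1)=> i' j'; case: (tiP s2)=> k' l'.
have E x y z w E' : cast_ord E' (@ti (b1 + b2) (x2 + x1) (ti x y) (ti z w)) =
   ti (ti x (ti y z)) w by index_eq.
by rewrite qcast_E !E !tens_E !mulrA.
Qed.

Lemma qcast_unit n (e : (n + 0 = n)%N) (A : Mx n) (c : C) :
  qcast e (tens A (c%:M : Mx 0)) = c *: A.
Proof.
apply/matrixP=> r s; rewrite qcast_E.
have E x E' : cast_ord E' x = @ti n 0 x ord0 by index_eq.
by rewrite !E tens_E !mxE eqxx mulr1n mulrC.
Qed.

Lemma ptr_tens b y (A : Mx b) (B : Mx y) : ptr (tens A B) = \tr B *: A.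
Proof. by rewrite /ptr ttens_tens ?qcast_unit //; apply: lin_disc. Qed.

Definition kraus p q (I : finType) (K : I -> 'M[C]_(q, p)) (rho : 'M[C]_p) : 'M[C]_q :=
  \sum_i K i *m rho *m mxadj (K i).

Lemma lin_kraus p q (I : finType) (K : I -> 'M[C]_(q, p)) : linmap (kraus K).
Proof.
move=> a x y; rewrite /kraus scaler_sumr -big_split; apply: eq_bigr=> i _.
by rewrite mulmxDr mulmxDl -scalemxAr -scalemxAl.
Qed.

End Qubits.

Ltac solve_linmap := repeat first
  [ assumption | exact: lin_id | exact: lin_ttens | exact: lin_qcast
  | exact: lin_qswap | exact: lin_ptr | exact: lin_disc | exact: lin_kraus
  | exact: lin_conj | exact: lin_tensl | exact: lin_tensr | apply: lin_comp ].


Section KrausMaps.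
Variable C : numClosedFieldType.

Lemma kraus1 p q (V : 'M[C]_(q, p)) rho :
  kraus (fun _ : 'I_1 => V) rho = V *m rho *m mxadj V.
Proof. by rewrite /kraus big_ord1. Qed.

Lemma kraus_comp p q r (I J : finType) (K : I -> 'M[C]_(q, p)) (L : J -> 'M[C]_(r, q)) rho :
  kraus L (kraus K rho) = kraus (fun ij : I * J => L ij.2 *m K ij.1) rho.
Proof.
rewrite /kraus (eq_bigr (fun j => \sum_i L j *m (K i *m rho *m mxadj (K i)) *m mxadj (L j))).
  rewrite exchange_big pair_big /=; apply: eq_bigr=> -[i j] _ /=.
  by rewrite mxadjM !mulmxA.
by move=> j _; rewrite mulmx_sumr mulmx_suml.
Qed.

(* Kraus maps are positive, and [id (x) kraus K = kraus (1 (x) K)], hence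
   Kraus maps are completely positive. *)
Lemma psd_kraus p q (I : finType) (K : I -> 'M[C]_(q, p)) (A : 'M[C]_p) :
  psd A -> psd (kraus K A).
Proof.
move=> hA v; rewrite /kraus mulmx_sumr mulmx_suml summxE; apply: sumr_ge0=> i _.
by have := hA (mxadj (K i) *m v); rewrite mxadjM mxadjK !mulmxA.
Qed.

Lemma tmap_id_kraus k p q (I : finType) (K : I -> 'M[C]_(q, p)) (A : 'M[C]_(k * p)) :
  tmap (@idfun 'M[C]_k) (kraus K) A = kraus (fun i => (1%:M : 'M[C]_k) *t K i) A.
Proof.
move: A; apply: lin_ext_mxtens; [exact: lin_tmap|exact: lin_kraus|] => A B.
rewrite tmap_tens //; last exact: lin_kraus.
rewrite /kraus tensmx_sumr; apply: eq_bigr=> i _.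
by rewrite tensmx_mul mxadj_tens mxadj1 tensmx_mul mul1mx mulmx1.
Qed.

Lemma CPM_kraus n m (I : finType) (K : I -> 'M[C]_(2 ^ m, 2 ^ n)) : CPM (kraus K).
Proof.
split=> [|k A hA]; first exact: lin_kraus.
by rewrite tmap_id_kraus; apply: psd_kraus.
Qed.

Lemma CPM_conj n m (V : 'M[C]_(2 ^ m, 2 ^ n)) : CPM (fun rho => V *m rho *m mxadj V).
Proof.
have [lK cK] := CPM_kraus (fun _ : 'I_1 => V).
split=> [|k A hA]; first exact: lin_conj.
have e : (fun rho => V *m rho *m mxadj V) =1 kraus (fun _ : 'I_1 => V).
  by move=> x; rewrite kraus1.
by rewrite (tmap_ext (frefl idfun) e); apply: cK.
Qed.

Lemma tp_kraus p q (I : finType) (K : I -> 'M[C]_(q, p)) rho :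
  \sum_i mxadj (K i) *m K i = 1%:M -> \tr (kraus K rho) = \tr rho.
Proof.
move=> h; have tr_sum := big_morph _ (@mxtraceD C _) (mxtrace0 C _).
rewrite /kraus tr_sum.
under eq_bigr => i _ do rewrite mxtrace_mulC mulmxA.
by rewrite -tr_sum -mulmx_suml h mul1mx.
Qed.

Definition tensop m1 n1 m2 n2 (V : 'M[C]_(2 ^ m1, 2 ^ n1)) (W : 'M[C]_(2 ^ m2, 2 ^ n2)) :
  'M[C]_(2 ^ (m1 + m2), 2 ^ (n1 + n2)) :=
  castmx (esym (expnD 2 m1 m2), esym (expnD 2 n1 n2)) (V *t W).

Lemma tensop_conj m1 n1 m2 n2 (V : 'M[C]_(2 ^ m1, 2 ^ n1)) (W : 'M[C]_(2 ^ m2, 2 ^ n2)) A B :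
  tensop V W *m tens A B *m mxadj (tensop V W) =
  tens (V *m A *m mxadj V) (W *m B *m mxadj W).
Proof. by rewrite /tensop /tens mxadj_cast !mul_castmx mxadj_tens !tensmx_mul. Qed.

Lemma ttens_kraus n1 m1 n2 m2 (I J : finType) (K : I -> 'M[C]_(2 ^ m1, 2 ^ n1))
  (L : J -> 'M[C]_(2 ^ m2, 2 ^ n2)) rho :
  ttens (kraus K) (kraus L) rho = kraus (fun p : I * J => tensop (K p.1) (L p.2)) rho.
Proof.
move: rho; apply: lin_ext; [exact: lin_ttens|exact: lin_kraus|] => A B.
rewrite ttens_tens; try exact: lin_kraus.
rewrite /kraus (lin_sum (lin_tensl _)).
under eq_bigr => i _ do rewrite (lin_sum (lin_tensr _)).
by rewrite pair_bigA /=; apply: eq_bigr=> -[i j] _; rewrite tensop_conj.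
Qed.

Lemma ttens_conj n1 m1 n2 m2 (V : 'M[C]_(2 ^ m1, 2 ^ n1)) (W : 'M[C]_(2 ^ m2, 2 ^ n2)) rho :
  ttens (fun r => V *m r *m mxadj V) (fun r => W *m r *m mxadj W) rho =
  tensop V W *m rho *m mxadj (tensop V W).
Proof.
move: rho; apply: lin_ext; [exact: lin_ttens|exact: lin_conj|] => A B.
by rewrite ttens_tens ?tensop_conj //; apply: lin_conj.
Qed.

End KrausMaps.

Section Positivity.
Variable C : numClosedFieldType.

Definition sform d (A : 'M[C]_d) (x y : 'cV[C]_d) : C := (mxadj x *m A *m y) 0 0.

Lemma sform_expand d (A : 'M[C]_d) x y c :
  sform A (x + c *: y) (x + c *: y) =
  sform A x x + c * sform A x y + c^* * sform A y x + c^* * c * sform A y y.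
Proof.
rewrite /sform mxadjD mxadjZ !mulmxDl !mulmxDr -!scalemxAl -!scalemxAr.
have entryD (u v : 'M[C]_1) : (u + v) 0 0 = u 0 0 + v 0 0 by rewrite mxE.
have entryZ a (u : 'M[C]_1) : (a *: u) 0 0 = a * u 0 0 by rewrite mxE.
by rewrite !entryD !entryZ; ring.
Qed.

Lemma sform_delta d (A : 'M[C]_d) i j :
  sform A (delta_mx i 0) (delta_mx j 0) = A i j.
Proof. by rewrite /sform mxadj_delta -rowE -colE !mxE. Qed.

(* A positive semidefinite matrix is Hermitian: polarize the real quadratic
   form [z^* A z] at [z = e_i + e_j] and [z = e_i + 'i e_j]. *)
Lemma psd_herm d (A : 'M[C]_d) : psd A -> forall i j, A j i = (A i j)^*.
Proof.
move=> hA i j.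
have real_form (z : 'cV[C]_d) : (sform A z z)^* = sform A z z.
  exact/geC0_conj/hA.
have h1 := real_form (delta_mx i 0 + 1 *: delta_mx j 0).
have h2 := real_form (delta_mx i 0 + 'i *: delta_mx j 0).
have hi := real_form (delta_mx i 0); have hj := real_form (delta_mx j 0).
rewrite !sform_expand !sform_delta in h1 h2 hi hj.
rewrite !(rmorphD, rmorphM, rmorphN) /= ?(conjCK, conjC1, conjCi) hi hj in h1 h2.
rewrite ?rmorphN /= ?conjCi ?opprK in h2.
set a := A i j in h1 h2 *; set b := A j i in h1 h2 *.
have sum_real : a^* + b^* = a + b.
  transitivity ((A i i + 1 * a^* + 1 * b^* + 1 * 1 * A j j) - A i i - A j j); first ring.
  rewrite h1; ring.
have diff_imag : 'i * (b^* - a^*) = 'i * (a - b).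
  transitivity ((A i i + - 'i * a^* + 'i * b^* + 'i * - 'i * A j j) - A i i
     - ('i * - 'i) * A j j); first ring.
  rewrite h2; ring.
move/(mulfI (neq0Ci C)): diff_imag => diff_imag.
have : b^* * 2%:R = a * 2%:R.
  transitivity ((a^* + b^*) + (b^* - a^*)); first ring.
  by rewrite sum_real diff_imag; ring.
move/(mulIf _) => h; have {h} <- : b^* = a by apply: h; rewrite pnatr_eq0.
by rewrite conjCK.
Qed.

Local Open Scope sesquilinear_scope.

Lemma mxadj_trmxC m n (A : 'M[C]_(m, n)) : mxadj A = A ^t*.
Proof. by rewrite /mxadj map_trmx. Qed.

Lemma mxadj_trmxCK m n (A : 'M[C]_(m, n)) : mxadj (A ^t*) = A.
Proof. by rewrite mxadj_trmxC trmxCK. Qed.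

(* Every positive semidefinite matrix factors as [B B^*]: diagonalize it in
   an orthonormal basis and take the square roots of the eigenvalues. *)
Lemma psd_factor d (A : 'M[C]_d) : psd A -> exists B : 'M[C]_d, A = B *m mxadj B.
Proof.
move=> hA.
have hH : mxadj A = A by apply/matrixP=> i j; rewrite mxadjE -psd_herm.
have /orthomx_spectralP eA : A \is normalmx by apply/normalmxP; rewrite -mxadj_trmxC hH.
set S := spectralmx A in eA; set dd := spectral_diag A in eA.
have iS : invmx S = S^t* := invmx_unitary (spectral_unitarymx A).
have SS : S *m S^t* = 1%:M by apply/unitarymxP/spectral_unitarymx.
have SAS : S *m A *m S^t* = diag_mx dd.
  by rewrite eA iS !mulmxA SS mul1mx -mulmxA SS mulmx1.
have dpos x : 0 <= dd 0 x.
  have := hA (S^t* *m delta_mx x 0).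
  rewrite mxadjM mxadj_trmxCK mxadj_delta !mulmxA -(mulmxA _ S) -(mulmxA _ (S *m A)).
  by rewrite SAS -rowE -colE !mxE eqxx mulr1n.
pose s := \row_x sqrtC (dd 0 x).
exists (S^t* *m diag_mx s).
rewrite mxadjM mxadj_diag_ge0 => [|x]; last by rewrite mxE sqrtC_ge0.
rewrite mxadj_trmxCK -mulmxA (mulmxA (diag_mx s)) mulmx_diag.
rewrite {1}eA iS !mulmxA; congr (_ *m _ *m _); congr diag_mx.
by apply/matrixP=> i j; rewrite !mxE ord1 -expr2 sqrtCK.
Qed.

Lemma psd_rank1 d (w : 'cV[C]_d) : psd (w *m mxadj w).
Proof.
move=> v.
have -> : mxadj v *m (w *m mxadj w) *m v = (mxadj v *m w) *m mxadj (mxadj v *m w).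
  by rewrite mxadjM mxadjK !mulmxA.
by rewrite !mxE big_ord1 mxadjE; exact: mul_conjC_ge0.
Qed.

Definition choi p q (f : 'M[C]_p -> 'M[C]_q) : 'M[C]_(p * q) :=
  tmap (@idfun 'M[C]_p) f (\sum_a \sum_b (delta_mx a b *t delta_mx a b)).

Lemma choiE p q (f : 'M[C]_p -> 'M[C]_q) i j k l :
  linmap f -> choi f (mxtens_index (i, k)) (mxtens_index (j, l)) = f (delta_mx i j) k l.
Proof.
move=> lf; rewrite /choi (lin_sum (lin_tmap _ _)) summxE (bigD1 i) //=.
rewrite (lin_sum (lin_tmap _ _)) summxE (bigD1 j) //=.
rewrite tmap_tens // tensmxE !mxE !eqxx mul1r big1 ?addr0 => [|b /negbTE hb].
  rewrite big1 ?addr0 // => a /negbTE ha.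
  rewrite (lin_sum (lin_tmap _ _)) summxE big1 // => b _.
  by rewrite tmap_tens // tensmxE !mxE [i == a]eq_sym ha mul0r.
by rewrite tmap_tens // tensmxE !mxE [j == b]eq_sym hb andbF mul0r.
Qed.

Lemma psd_choi p q (f : 'M[C]_p -> 'M[C]_q) : completely_positive f -> psd (choi f).
Proof.
move=> cpf; apply: cpf.
pose w : 'cV[C]_(p * p) := \col_r ((mxtens_unindex r).1 == (mxtens_unindex r).2)%:R.
suff -> : \sum_a \sum_b (delta_mx a b *t delta_mx a b) = w *m mxadj w by apply: psd_rank1.
apply/matrixP=> r s; case: (mxtens_indexP r)=> i k; case: (mxtens_indexP s)=> j l.
rewrite mxE big_ord1 mxadjE !mxE !mxtens_indexK /= rmorph_nat -natrM.
rewrite summxE (bigD1 i) //= summxE (bigD1 j) //= tensmxE !mxE !eqxx /= mul1r.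
rewrite big1 ?addr0 => [|b /negbTE hb]; last first.
  by rewrite tensmxE !mxE [j == b]eq_sym hb andbF mul0r.
rewrite big1 ?addr0 => [|a /negbTE ha]; last first.
  by rewrite summxE big1 // => b _; rewrite tensmxE !mxE [i == a]eq_sym ha mul0r.
by rewrite [k == i]eq_sym [l == j]eq_sym; case: (i == k); case: (j == l).
Qed.

(* Choi–Kraus: a linear completely positive map is a Kraus map, with Kraus
   operators read off the columns of a factorization of its Choi matrix. *)
Lemma choi_kraus p q (f : 'M[C]_p -> 'M[C]_q) :
  linmap f -> completely_positive f ->
  exists K : 'I_(p * q) -> 'M[C]_(q, p), forall rho, f rho = kraus K rho.
Proof.
move=> lf cpf; have [B eB] := psd_factor (psd_choi cpf).
exists (fun z => \matrix_(k, i) B (mxtens_index (i, k)) z) => rho.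
rewrite (lin_delta_expand lf) (lin_delta_expand (lin_kraus _)).
apply: eq_bigr=> i _; apply: eq_bigr=> j _; congr (_ *: _).
apply/matrixP=> k l; rewrite -choiE // eB /kraus summxE !mxE.
by apply: eq_bigr=> z _; rewrite mul_delta_entry !mxE.
Qed.

End Positivity.


Section Freedom.
Variable C : numClosedFieldType.
Local Open Scope sesquilinear_scope.

(* A self-adjoint [Q] fixing the columns of [A] fixes those of any [B] with
   the same Gram matrix [A A^* = B B^*]: indeed [(QB - B)(QB - B)^* = 0]. *)
Lemma fix_same_gram n r t (Q : 'M[C]_n) (A : 'M[C]_(n, r)) (B : 'M[C]_(n, t)) :
  mxadj Q = Q -> Q *m A = A -> A *m mxadj A = B *m mxadj B -> Q *m B = B.
Proof.
move=> hQ hQA hAB; have hAQ : mxadj A *m Q = mxadj A by rewrite -{1}hQ -mxadjM hQA.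
apply/eqP; rewrite -subr_eq0; apply/eqP; apply: mulmx_adj_eq0.
rewrite mxadjB mxadjM hQ mulmxBl !mulmxBr.
have e1 : Q *m B *m (mxadj B *m Q) = A *m mxadj A.
  by rewrite !mulmxA -(mulmxA Q B) -hAB mulmxA hQA -mulmxA hAQ.
have e2 : Q *m B *m mxadj B = A *m mxadj A by rewrite -mulmxA -hAB mulmxA hQA.
have e3 : B *m (mxadj B *m Q) = A *m mxadj A by rewrite mulmxA -hAB -mulmxA hAQ.
by rewrite e1 e2 e3 hAB subrr.
Qed.

Definition diag_pinv r (d : 'rV[C]_r) : 'M[C]_r := diag_mx (\row_x (d 0 x)^-1).
Definition diag_supp r (d : 'rV[C]_r) : 'M[C]_r := diag_mx (\row_x ((d 0 x)^-1 * d 0 x)).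

Lemma diag_pinvK r (d : 'rV[C]_r) : diag_pinv d *m diag_mx d = diag_supp d.
Proof. by rewrite mulmx_diag; congr diag_mx; apply/matrixP=> i j; rewrite !mxE. Qed.

Lemma diag_supp_idem r (d : 'rV[C]_r) : diag_supp d *m diag_supp d = diag_supp d.
Proof.
rewrite mulmx_diag; congr diag_mx; apply/matrixP=> i j; rewrite !mxE.
by have [->|hn] := eqVneq (d 0 j) 0; rewrite ?invr0 ?mul0r // mulVf // mulr1.
Qed.

Lemma mxadj_diag_supp r (d : 'rV[C]_r) : mxadj (diag_supp d) = diag_supp d.
Proof.
apply: mxadj_diag_ge0 => x; rewrite mxE.
by have [->|hn] := eqVneq (d 0 x) 0; rewrite ?mulr0 // mulVf.
Qed.

Lemma freedom_diag n r t (A : 'M[C]_(n, r)) (B : 'M[C]_(n, t)) (d : 'rV[C]_r) :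
  mxadj A *m A = diag_mx d -> A *m mxadj A = B *m mxadj B ->
  exists T : 'M[C]_(r, t),
    [/\ B = A *m T, T *m mxadj T = diag_supp d & A *m diag_supp d = A].
Proof.
move=> hD hAB.
have dE x : d 0 x = \sum_k (A k x)^* * A k x.
  have /matrixP/(_ x x) := hD; rewrite !mxE eqxx mulr1n => <-.
  by apply: eq_bigr=> k _; rewrite mxadjE.
have dpos x : 0 <= d 0 x.
  by rewrite dE; apply: sumr_ge0=> k _; rewrite mulrC mul_conjC_ge0.
have dz x k : d 0 x = 0 -> A k x = 0.
  rewrite dE => h.
  have nn j : xpredT j -> 0 <= (A j x)^* * A j x by rewrite mulrC mul_conjC_ge0.
  have := @psumr_eq0P _ _ _ _ nn h k isT.
  by move/eqP; rewrite mulf_eq0 conjC_eq0 orbb => /eqP.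
have hAP : A *m diag_supp d = A.
  apply/matrixP=> k x; rewrite mul_mx_diag mxE [_ 0 x]mxE.
  have [h0|hn] := eqVneq (d 0 x) 0; first by rewrite (dz x k h0) mul0r.
  by rewrite mulVf // mulr1.
have aD : mxadj (diag_pinv d) = diag_pinv d.
  by apply: mxadj_diag_ge0 => x; rewrite mxE invr_ge0.
have hQA : A *m diag_pinv d *m mxadj A *m A = A.
  by rewrite -mulmxA hD -mulmxA diag_pinvK hAP.
have hQ : mxadj (A *m diag_pinv d *m mxadj A) = A *m diag_pinv d *m mxadj A.
  by rewrite !mxadjM mxadjK aD mulmxA.
have hQB := fix_same_gram hQ hQA hAB.
exists (diag_pinv d *m mxadj A *m B); split=> //; first by rewrite !mulmxA hQB.
rewrite !mxadjM mxadjK aD.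
have -> : diag_pinv d *m mxadj A *m B *m (mxadj B *m (A *m diag_pinv d)) =
   diag_pinv d *m mxadj A *m (B *m mxadj B) *m A *m diag_pinv d by rewrite !mulmxA.
rewrite -hAB.
have -> : diag_pinv d *m mxadj A *m (A *m mxadj A) *m A *m diag_pinv d =
   diag_pinv d *m (mxadj A *m A) *m (mxadj A *m A) *m diag_pinv d by rewrite !mulmxA.
rewrite hD /diag_supp /diag_pinv !mulmx_diag; congr diag_mx; apply/matrixP=> i j.
rewrite !mxE; have [->|hn] := eqVneq (d 0 j) 0; rewrite ?mulr0 ?mul0r //.
by rewrite mulVf // mul1r mulfV.
Qed.

(* Reduce to [freedom_diag] by diagonalizing [A^* A] with a unitary. *)
Lemma freedom n r t (A : 'M[C]_(n, r)) (B : 'M[C]_(n, t)) :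
  A *m mxadj A = B *m mxadj B ->
  exists T : 'M[C]_(r, t), exists P : 'M[C]_r,
    [/\ B = A *m T, T *m mxadj T = P, A *m P = A, mxadj P = P & P *m P = P].
Proof.
move=> hAB; pose H := mxadj A *m A.
have hH : mxadj H = H by rewrite /H mxadjM mxadjK.
have /orthomx_spectralP eH : H \is normalmx by apply/normalmxP; rewrite -mxadj_trmxC hH.
set S := spectralmx H in eH; set d := spectral_diag H in eH.
have uS : S \is unitarymx := spectral_unitarymx H.
have iS : invmx S = S^t* := invmx_unitary uS.
have SS : S *m S^t* = 1%:M by apply/unitarymxP.
have StS : S^t* *m S = 1%:M by rewrite -[S^t*]mul1mx mulmxKtV.
have aA0 : mxadj (A *m S^t*) = S *m mxadj A by rewrite mxadjM mxadj_trmxCK.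
have hD : mxadj (A *m S^t*) *m (A *m S^t*) = diag_mx d.
  rewrite aA0 mulmxA -(mulmxA S) -/H eH iS !mulmxA SS mul1mx.
  by rewrite -mulmxA SS mulmx1.
have hAA : (A *m S^t*) *m mxadj (A *m S^t*) = A *m mxadj A.
  by rewrite aA0 mulmxA -(mulmxA A) StS mulmx1.
have [T [hBT hTT hAP]] := freedom_diag hD (etrans hAA hAB).
exists (S^t* *m T), (S^t* *m diag_supp d *m S); split.
- by rewrite mulmxA.
- by rewrite mxadjM mxadj_trmxCK -mulmxA (mulmxA T) hTT mulmxA.
- by rewrite !mulmxA hAP -mulmxA StS mulmx1.
- by rewrite !mxadjM mxadj_trmxCK mxadj_diag_supp mxadj_trmxC mulmxA.
- by rewrite -!mulmxA (mulmxA S) SS mul1mx (mulmxA (diag_supp d)) diag_supp_idem.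
Qed.

End Freedom.


Section Factorization.
Variable C : numClosedFieldType.
Local Notation Mx n := 'M[C]_(2 ^ n).

Definition blk b x p (V : 'M[C]_(2 ^ (b + x), p)) (z : 'I_(2 ^ x)) : 'M[C]_(2 ^ b, p) :=
  \matrix_(i, c) V (ti i z) c.

Lemma blk_prod b x p (V W : 'M[C]_(2 ^ (b + x), p)) (M : 'M[C]_p) i z j z' :
  (V *m M *m mxadj W) (ti i z) (ti j z') = (blk V z *m M *m mxadj (blk W z')) i j.
Proof.
rewrite !mxE; apply: eq_bigr=> t _; rewrite !mxE; congr (_ * _).
by apply: eq_bigr=> c _; rewrite !mxE.
Qed.

Lemma sum_conj_sum p q (I : finType) (X : I -> 'M[C]_(q, p)) (a b : I -> C) (rho : 'M[C]_p) :
  (\sum_z a z *: X z) *m rho *m mxadj (\sum_z b z *: X z) =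
  \sum_z \sum_z' (a z * (b z')^*) *: (X z *m rho *m mxadj (X z')).
Proof.
rewrite mulmx_suml mulmx_suml; apply: eq_bigr=> z _.
rewrite mxadj_sum mulmx_sumr; apply: eq_bigr=> z' _.
by rewrite mxadjZ -scalemxAl -scalemxAl -scalemxAr scalerA.
Qed.

Lemma ptr_E b y (M : Mx (b + y)) i j : ptr M i j = \sum_z M (ti i z) (ti j z).
Proof.
pose G (M : Mx (b + y)) : Mx b := \matrix_(i, j) \sum_z M (ti i z) (ti j z).
have lG : linmap G.
  move=> a u v; apply/matrixP=> r s; rewrite !mxE mulr_sumr -big_split.
  by apply: eq_bigr=> z _; rewrite !mxE.
rewrite (@lin_ext C b y (2 ^ b) (@ptr C b y) G (@lin_ptr C b y) lG); first by rewrite mxE.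
move=> A B; rewrite ptr_tens; apply/matrixP=> r s; rewrite !mxE /mxtrace mulr_suml.
by apply: eq_bigr=> z _; rewrite tens_E mulrC.
Qed.

Lemma ttens_id_E b x y (c : Mx x -> Mx y) (M : Mx (b + x)) i y0 j y1 :
  linmap c ->
  ttens (@idfun (Mx b)) c M (ti i y0) (ti j y1) =
  \sum_z \sum_z' M (ti i z) (ti j z') * c (delta_mx z z') y0 y1.
Proof.
move=> lc.
pose G (M : Mx (b + x)) : Mx (b + y) := \matrix_(r, s) \sum_z \sum_z'
  M (ti (unti r).1 z) (ti (unti s).1 z') * c (delta_mx z z') (unti r).2 (unti s).2.
have lG : linmap G.
  move=> a u v; apply/matrixP=> r s; rewrite !mxE mulr_sumr -big_split.
  apply: eq_bigr=> z _; rewrite mulr_sumr -big_split.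
  by apply: eq_bigr=> z' _; rewrite !mxE mulrDl mulrA.
rewrite (@lin_ext C b x _ _ G (lin_ttens _ _) lG); first by rewrite mxE !unti_ti.
move=> A B; rewrite ttens_tens //; apply/matrixP=> r s.
case: (tiP r)=> i' y0'; case: (tiP s)=> j' y1'.
rewrite tens_E !mxE !unti_ti /= (lin_delta_expand lc) summxE mulr_sumr.
apply: eq_bigr=> z _; rewrite summxE mulr_sumr.
by apply: eq_bigr=> z' _; rewrite mxE tens_E mulrA.
Qed.

Lemma ttens_kraus_conj_E a b x y (I : finType) (U : I -> 'M[C]_(2 ^ y, 2 ^ x))
  (V : 'M[C]_(2 ^ (b + x), 2 ^ a)) rho i y0 i' y1 :
  ttens (@idfun (Mx b)) (kraus U) (V *m rho *m mxadj V) (ti i y0) (ti i' y1) =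
  \sum_u ((\sum_z U u y0 z *: blk V z) *m rho *m mxadj (\sum_z U u y1 z *: blk V z)) i i'.
Proof.
rewrite ttens_id_E; last exact: lin_kraus.
transitivity (\sum_u \sum_z \sum_z' (U u y0 z * (U u y1 z')^*) *
                (blk V z *m rho *m mxadj (blk V z')) i i'); last first.
  apply: eq_bigr=> u _; rewrite sum_conj_sum summxE; apply: eq_bigr=> z _.
  by rewrite summxE; apply: eq_bigr=> z' _; rewrite [RHS]mxE.
rewrite [RHS]exchange_big; apply: eq_bigr=> z _.
rewrite [RHS]exchange_big; apply: eq_bigr=> z' _ /=.
rewrite blk_prod /kraus summxE mulr_sumr; apply: eq_bigr=> u _.
by rewrite mul_delta_entry mxadjE mulrC.
Qed.

(* Reshaping [V] and a Kraus family [G] of maps [A -> B (x) Y] into matrices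
   whose columns are indexed by the environment; the marginals on [B] of
   [V rho V^*] and of [kraus G rho] are then encoded by their Gram matrices. *)
Definition dilation_mx a b x (V : 'M[C]_(2 ^ (b + x), 2 ^ a)) :
  'M[C]_(2 ^ b * 2 ^ a, 2 ^ x) :=
  \matrix_(r, z) V (ti (mxtens_unindex r).1 z) (mxtens_unindex r).2.

Definition kraus_dilation_mx a b y t (G : 'I_t -> 'M[C]_(2 ^ (b + y), 2 ^ a)) :
  'M[C]_(2 ^ b * 2 ^ a, t * 2 ^ y) :=
  \matrix_(r, w) G (mxtens_unindex w).1 (ti (mxtens_unindex r).1 (mxtens_unindex w).2)
                   (mxtens_unindex r).2.

Lemma dilation_mxE a b x (V : 'M[C]_(2 ^ (b + x), 2 ^ a)) i c z :
  dilation_mx V (mxtens_index (i, c)) z = V (ti i z) c.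
Proof. by rewrite mxE mxtens_indexK. Qed.

Lemma kraus_dilation_mxE a b y t (G : 'I_t -> 'M[C]_(2 ^ (b + y), 2 ^ a)) i c j y0 :
  kraus_dilation_mx G (mxtens_index (i, c)) (mxtens_index (j, y0)) = G j (ti i y0) c.
Proof. by rewrite mxE !mxtens_indexK. Qed.

Lemma marginal_gram a b x y t (V : 'M[C]_(2 ^ (b + x), 2 ^ a))
  (G : 'I_t -> 'M[C]_(2 ^ (b + y), 2 ^ a)) :
  (forall rho, ptr (kraus G rho) = ptr (V *m rho *m mxadj V)) ->
  dilation_mx V *m mxadj (dilation_mx V) =
  kraus_dilation_mx G *m mxadj (kraus_dilation_mx G).
Proof.
move=> hGV; apply/matrixP=> r s.
case: (mxtens_indexP r)=> i c; case: (mxtens_indexP s)=> i' c'.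
have /matrixP/(_ i i') := hGV (delta_mx c c'); rewrite !ptr_E => h.
rewrite [LHS]mxE [RHS]mxE sum_mxtens exchange_big /=.
transitivity (\sum_z (V *m delta_mx c c' *m mxadj V) (ti i z) (ti i' z)).
  by apply: eq_bigr=> z _; rewrite mul_delta_entry !mxadjE !mxE !mxtens_indexK.
rewrite -h /kraus; apply: eq_bigr=> y0 _; rewrite summxE; apply: eq_bigr=> j _.
by rewrite mul_delta_entry !mxadjE !kraus_dilation_mxE.
Qed.

Lemma kraus_dilation_blk a b x y t (V : 'M[C]_(2 ^ (b + x), 2 ^ a))
  (G : 'I_t -> 'M[C]_(2 ^ (b + y), 2 ^ a)) (T : 'M[C]_(2 ^ x, t * 2 ^ y)) j y0 :
  kraus_dilation_mx G = dilation_mx V *m T ->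
  blk (G j) y0 = \sum_z T z (mxtens_index (j, y0)) *: blk V z.
Proof.
move=> hGT; apply/matrixP=> i c; rewrite summxE !mxE -kraus_dilation_mxE hGT mxE.
by apply: eq_bigr=> z _; rewrite dilation_mxE !mxE mulrC.
Qed.

Lemma dilation_null a b x (V : 'M[C]_(2 ^ (b + x), 2 ^ a)) (Q : 'M[C]_(2 ^ x)) k :
  dilation_mx V *m Q = 0 -> \sum_z Q z k *: blk V z = 0.
Proof.
move=> hVQ; apply/matrixP=> i c; rewrite summxE [RHS]mxE.
transitivity ((dilation_mx V *m Q) (mxtens_index (i, c)) k); last by rewrite hVQ mxE.
by rewrite mxE; apply: eq_bigr=> z _; rewrite !mxE mxtens_indexK mulrC.
Qed.

(* Completing the partial isometry [T] (with [T T^* = P]) by the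
   complementary projector [1 - P] into a trace-preserving Kraus family. *)
Definition completion x' y' t (T : 'M[C]_(x', t * y')) (P : 'M[C]_x') (y00 : 'I_y')
  (u : 'I_t + 'I_x') : 'M[C]_(y', x') :=
  match u with
  | inl j => \matrix_(y0, z) T z (mxtens_index (j, y0))
  | inr k => \matrix_(y0, z) ((y0 == y00)%:R * (1%:M - P) z k)
  end.

Lemma completion_tp x' y' t (T : 'M[C]_(x', t * y')) (P : 'M[C]_x') (y00 : 'I_y') :
  T *m mxadj T = P -> mxadj P = P -> P *m P = P ->
  \sum_u mxadj (completion T P y00 u) *m completion T P y00 u = 1%:M.
Proof.
move=> hTT hP hPP; pose Q : 'M[C]_x' := 1%:M - P.
have hQQ : Q *m mxadj Q = Q.
  by rewrite /Q mxadjB mxadj1 hP mulmxBl !mulmxBr mul1mx mulmx1 hPP mul1mx subrr subr0.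
apply/matrixP=> z z'; rewrite big_sumType /= mxE !summxE.
have eP : \sum_j (mxadj (completion T P y00 (inl j)) *m completion T P y00 (inl j)) z z'
          = P z' z.
  rewrite -hTT [RHS]mxE [RHS]sum_mxtens; apply: eq_bigr=> j _.
  by rewrite mxE; apply: eq_bigr=> y0 _; rewrite mxadjE !mxE mulrC.
have eQ : \sum_k (mxadj (completion T P y00 (inr k)) *m completion T P y00 (inr k)) z z'
          = Q z' z.
  rewrite -hQQ mxE; apply: eq_bigr=> k _; rewrite mxE (bigD1 y00) //= big1.
    by rewrite addr0 mxadjE !mxE eqxx /= mulr1n !mul1r mulrC.
  by move=> y0 /negbTE hy; rewrite mxadjE !mxE hy /= mulr0n !mul0r mulr0.
by rewrite eP eQ /Q !mxE addrC subrK eq_sym.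
Qed.

Lemma pure_factor a b x y (V : 'M[C]_(2 ^ (b + x), 2 ^ a)) (g : Mx a -> Mx (b + y)) :
  CPM g -> (forall rho, ptr (g rho) = ptr (V *m rho *m mxadj V)) ->
  exists (I : finType) (U : I -> 'M[C]_(2 ^ y, 2 ^ x)),
    \sum_i mxadj (U i) *m U i = 1%:M /\
    forall rho, g rho = ttens (@idfun (Mx b)) (kraus U) (V *m rho *m mxadj V).
Proof.
case=> lg cpg hgV; have [G eG] := choi_kraus lg cpg.
have hGV rho : ptr (kraus G rho) = ptr (V *m rho *m mxadj V) by rewrite -eG.
have [T [P [hGT hTT hAP hP hPP]]] := freedom (marginal_gram hGV).
have y00 : 'I_(2 ^ y) by exists 0%N; rewrite expn_gt0.
exists _, (completion T P y00); split; first exact: completion_tp.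
move=> rho; apply/matrixP=> r s; case: (tiP r)=> i y0; case: (tiP s)=> i' y1.
rewrite ttens_kraus_conj_E eG /kraus summxE big_sumType /=.
have hnull k yy : \sum_z completion T P y00 (inr k) yy z *: blk V z = 0.
  under eq_bigr => z _ do rewrite mxE -scalerA.
  rewrite -scaler_sumr dilation_null ?scaler0 //.
  by rewrite mulmxBr mulmx1 hAP subrr.
rewrite [X in _ = _ + X]big1 ?addr0 => [|k _]; last by rewrite !hnull !mul0mx mxE.
apply: eq_bigr=> j _; rewrite blk_prod !(kraus_dilation_blk _ _ hGT).
by congr ((_ *m _ *m mxadj _) i i'); apply: eq_bigr=> z _; rewrite mxE.
Qed.

End Factorization.


Section StringDiagrams.
Variable C : numClosedFieldType.
Local Notation Mx n := 'M[C]_(2 ^ n).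

Lemma lin_ext_ll n m k q (F G : Mx (n + m + k) -> 'M[C]_q) :
  linmap F -> linmap G ->
  (forall A B D, F (tens (tens A B) D) = G (tens (tens A B) D)) -> F =1 G.
Proof.
move=> lF lG h; apply: lin_ext => // M' D; move: M'.
by apply: lin_ext; solve_linmap => A B; apply: h.
Qed.

Lemma lin_ext_rr n m k q (F G : Mx (n + (m + k)) -> 'M[C]_q) :
  linmap F -> linmap G ->
  (forall A B D, F (tens A (tens B D)) = G (tens A (tens B D))) -> F =1 G.
Proof.
move=> lF lG h; apply: lin_ext => // A M'; move: M'.
by apply: lin_ext; solve_linmap => B D; apply: h.
Qed.

Lemma lin_ext_rl n m k l q (F G : Mx (n + (m + k) + l) -> 'M[C]_q) :
  linmap F -> linmap G ->
  (forall A B D E, F (tens (tens A (tens B D)) E) = G (tens (tens A (tens B D)) E)) ->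
  F =1 G.
Proof.
move=> lF lG h; apply: lin_ext => // M' E; move: M'.
by apply: lin_ext_rr; solve_linmap => A B D; apply: h.
Qed.

Lemma lin_ext_22 n m k l q (F G : Mx (n + m + (k + l)) -> 'M[C]_q) :
  linmap F -> linmap G ->
  (forall A B D E, F (tens (tens A B) (tens D E)) = G (tens (tens A B) (tens D E))) ->
  F =1 G.
Proof.
move=> lF lG h; apply: lin_ext => // M1 M2; move: M1.
apply: lin_ext; solve_linmap => A B; move: M2.
by apply: lin_ext; solve_linmap => D E; apply: h.
Qed.

Lemma lin_ext_lll n m k l q (F G : Mx (n + m + k + l) -> 'M[C]_q) :
  linmap F -> linmap G ->
  (forall A B D E, F (tens (tens (tens A B) D) E) = G (tens (tens (tens A B) D) E)) ->
  F =1 G.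
Proof.
move=> lF lG h; apply: lin_ext => // M' E; move: M'.
by apply: lin_ext_ll; solve_linmap => A B D; apply: h.
Qed.

Lemma ttens_ext n1 m1 n2 m2 (f f' : Mx n1 -> Mx m1) (g g' : Mx n2 -> Mx m2) :
  f =1 f' -> g =1 g' -> ttens f g =1 ttens f' g'.
Proof. by move=> ef eg M; rewrite /ttens (tmap_ext ef eg). Qed.

Lemma ttens_comp n1 m1 k1 n2 m2 k2 (f : Mx n1 -> Mx m1) (f' : Mx k1 -> Mx n1)
  (g : Mx n2 -> Mx m2) (g' : Mx k2 -> Mx n2) :
  linmap f -> linmap f' -> linmap g -> linmap g' ->
  forall M, ttens f g (ttens f' g' M) = ttens (fun x => f (f' x)) (fun x => g (g' x)) M.
Proof.
move=> lf lf' lg lg'; apply: lin_ext; solve_linmap => A B.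
by rewrite !ttens_tens //; solve_linmap.
Qed.

Lemma ptr_ttens_tp b x y (h : Mx x -> Mx y) :
  linmap h -> (forall r, \tr (h r) = \tr r) ->
  forall M, ptr (ttens (@idfun (Mx b)) h M) = ptr M.
Proof.
move=> lh th; apply: lin_ext; solve_linmap => A B.
by rewrite ttens_tens ?ptr_tens ?th //; solve_linmap.
Qed.

Lemma ptr_ttens n m x (f : Mx n -> Mx m) :
  linmap f -> forall M, ptr (ttens f (@idfun (Mx x)) M) = f (ptr M).
Proof.
move=> lf; apply: lin_ext; solve_linmap => A B.
by rewrite ttens_tens ?ptr_tens ?(linZ lf) //; solve_linmap.
Qed.

Lemma tr_qswap a b (M : Mx (a + b)) : \tr (qswap M) = \tr M.
Proof.
have h : forall M : Mx (a + b), disc (@qswap C a b M) = disc M.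
  by apply: lin_ext; solve_linmap => A B; rewrite qswap_tens /disc !tr_tens mulrC.
by have /matrixP/(_ 0 0) := h M; rewrite !mxE.
Qed.

Lemma ptr_qcast_assoc2 b1 b2 x2 x1 (e : (b1 + (b2 + x2) + x1 = b1 + b2 + (x2 + x1))%N) M :
  ptr (qcast e M) = ttens (@idfun (Mx b1)) (@ptr C b2 x2) (ptr M).
Proof.
move: M; apply: lin_ext_rl; solve_linmap => B B2 X2 X.
rewrite qcast_assoc2 !ptr_tens tr_tens (linZ (lin_ttens _ _)) ttens_tens; solve_linmap.
by rewrite ptr_tens (linZ (lin_tensr _)) scalerA mulrC.
Qed.

Lemma ptr_swap_assoc b1 c x1 a2 (e2 : (b1 + c + x1 + a2 = b1 + c + (x1 + a2))%N)
  (e4 : (b1 + c + (a2 + x1) = b1 + (c + a2) + x1)%N) (e : (b1 + c + a2 = b1 + (c + a2))%N) M :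
  ptr (qcast e4 (ttens (@idfun (Mx (b1 + c))) (@qswap C x1 a2) (qcast e2 M))) =
  qcast e (ttens (@ptr C (b1 + c) x1) (@idfun (Mx a2)) M).
Proof.
move: M; apply: lin_ext_lll; solve_linmap => B Cm X A2.
rewrite qcast_assoc ttens_tens; solve_linmap.
rewrite qswap_tens qcast_assoc1 ptr_tens ttens_tens; solve_linmap.
by rewrite ptr_tens (linZ (lin_tensl _)) (linZ (lin_qcast _)) qcast_assoc.
Qed.

Lemma seq_comp_ext a1 b1 c a2 b2
  (f1 g1 : Mx a1 -> Mx (b1 + c)) (f2 g2 : Mx (c + a2) -> Mx b2) :
  f1 =1 g1 -> f2 =1 g2 -> seq_comp f1 f2 =1 seq_comp g1 g2.
Proof.
move=> e1 e2 rho; rewrite /seq_comp (ttens_ext e1 (frefl idfun)).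
exact: ttens_ext.
Qed.

Lemma ptr_seq_comp_pur a1 b1 c a2 b2 x1 x2
  (p1 : Mx a1 -> Mx (b1 + c + x1)) (p2 : Mx (c + a2) -> Mx (b2 + x2)) :
  linmap p1 -> linmap p2 ->
  forall rho, ptr (seq_comp_pur p1 p2 rho) =
    seq_comp (fun r => ptr (p1 r)) (fun r => ptr (p2 r)) rho.
Proof.
move=> l1 l2 rho; rewrite /seq_comp_pur /seq_comp.
rewrite ptr_ttens_tp; [|solve_linmap|exact: tr_qswap].
rewrite ptr_qcast_assoc2 ptr_ttens; last by solve_linmap.
rewrite ttens_comp; solve_linmap.
rewrite (@ptr_swap_assoc b1 c x1 a2 _ _ (esym (addnA b1 c a2))) ttens_comp; solve_linmap.
exact: ttens_ext.
Qed.

(* Naturality: channels [d1], [d2] applied to the environments [X1], [X2]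
   commute with every structural step of [seq_comp_pur]. *)
Lemma natural_assoc n m k l (d : Mx m -> Mx l) (e : (n + m + k = n + (m + k))%N)
  (e' : (n + l + k = n + (l + k))%N) M :
  linmap d ->
  qcast e' (ttens (ttens (@idfun (Mx n)) d) (@idfun (Mx k)) M) =
  ttens (@idfun (Mx n)) (ttens d (@idfun (Mx k))) (qcast e M).
Proof.
move=> ld; move: M; apply: lin_ext_ll; solve_linmap => A B D.
rewrite !ttens_tens; solve_linmap.
by rewrite !qcast_assoc !ttens_tens; solve_linmap.
Qed.

Lemma natural_swap n x1 a2 z1 (d1 : Mx x1 -> Mx z1) M :
  linmap d1 ->
  ttens (@idfun (Mx n)) (@qswap C z1 a2) (ttens (@idfun (Mx n)) (ttens d1 (@idfun (Mx a2))) M) =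
  ttens (@idfun (Mx n)) (ttens (@idfun (Mx a2)) d1) (ttens (@idfun (Mx n)) (@qswap C x1 a2) M).
Proof.
move=> ld; move: M; apply: lin_ext_rr; solve_linmap => A X A2.
rewrite !ttens_tens; solve_linmap.
by rewrite !qswap_tens !ttens_tens; solve_linmap.
Qed.

Lemma natural_assoc1 b1 c a2 x1 z1 (d1 : Mx x1 -> Mx z1)
  (e : (b1 + c + (a2 + x1) = b1 + (c + a2) + x1)%N)
  (e' : (b1 + c + (a2 + z1) = b1 + (c + a2) + z1)%N) M :
  linmap d1 ->
  qcast e' (ttens (@idfun (Mx (b1 + c))) (ttens (@idfun (Mx a2)) d1) M) =
  ttens (@idfun (Mx (b1 + (c + a2)))) d1 (qcast e M).
Proof.
move=> ld; move: M; apply: lin_ext_22; solve_linmap => B Cm A2 X.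
rewrite !ttens_tens; solve_linmap.
by rewrite !qcast_assoc1 !ttens_tens; solve_linmap.
Qed.

Lemma natural_interchange b1 c a2 x1 z1 b2 x2 z2 (d1 : Mx x1 -> Mx z1)
  (d2 : Mx x2 -> Mx z2) (p2 : Mx (c + a2) -> Mx (b2 + x2)) M :
  linmap d1 -> linmap d2 -> linmap p2 ->
  ttens (ttens (@idfun (Mx b1)) (fun r => ttens (@idfun (Mx b2)) d2 (p2 r))) (@idfun (Mx z1))
     (ttens (@idfun (Mx (b1 + (c + a2)))) d1 M) =
  ttens (ttens (@idfun (Mx b1)) (ttens (@idfun (Mx b2)) d2)) d1
     (ttens (ttens (@idfun (Mx b1)) p2) (@idfun (Mx x1)) M).
Proof.
move=> l1 l2 lp; move: M; apply: lin_ext_ll; solve_linmap => B N X.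
by rewrite !ttens_tens; solve_linmap.
Qed.

Lemma natural_assoc2 b1 b2 x2 z2 x1 z1 (d1 : Mx x1 -> Mx z1) (d2 : Mx x2 -> Mx z2)
  (e : (b1 + (b2 + x2) + x1 = b1 + b2 + (x2 + x1))%N)
  (e' : (b1 + (b2 + z2) + z1 = b1 + b2 + (z2 + z1))%N) M :
  linmap d1 -> linmap d2 ->
  qcast e' (ttens (ttens (@idfun (Mx b1)) (ttens (@idfun (Mx b2)) d2)) d1 M) =
  ttens (@idfun (Mx (b1 + b2))) (ttens d2 d1) (qcast e M).
Proof.
move=> l1 l2; move: M; apply: lin_ext_rl; solve_linmap => B B2 X2 X.
rewrite !ttens_tens; solve_linmap.
by rewrite !qcast_assoc2 !ttens_tens; solve_linmap.
Qed.

Lemma natural_swap_env n x2 x1 z2 z1 (d1 : Mx x1 -> Mx z1) (d2 : Mx x2 -> Mx z2) M :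
  linmap d1 -> linmap d2 ->
  ttens (@idfun (Mx n)) (@qswap C z2 z1) (ttens (@idfun (Mx n)) (ttens d2 d1) M) =
  ttens (@idfun (Mx n)) (ttens d1 d2) (ttens (@idfun (Mx n)) (@qswap C x2 x1) M).
Proof.
move=> l1 l2; move: M; apply: lin_ext_rr; solve_linmap => A X2 X.
rewrite !ttens_tens; solve_linmap.
by rewrite !qswap_tens !ttens_tens; solve_linmap.
Qed.

Lemma seq_comp_pur_ext a1 b1 c a2 b2 x1 x2
  (p1 q1 : Mx a1 -> Mx (b1 + c + x1)) (p2 q2 : Mx (c + a2) -> Mx (b2 + x2)) :
  p1 =1 q1 -> p2 =1 q2 -> seq_comp_pur p1 p2 =1 seq_comp_pur q1 q2.
Proof.
move=> e1 e2 rho; rewrite /seq_comp_pur (ttens_ext e1 (frefl idfun)).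
congr (ttens _ _ (qcast _ _)); apply: ttens_ext => // r.
exact: ttens_ext.
Qed.

Lemma seq_comp_pur_natural a1 b1 c a2 b2 x1 x2 z1 z2
  (p1 : Mx a1 -> Mx (b1 + c + x1)) (p2 : Mx (c + a2) -> Mx (b2 + x2))
  (d1 : Mx x1 -> Mx z1) (d2 : Mx x2 -> Mx z2) :
  linmap p1 -> linmap p2 -> linmap d1 -> linmap d2 ->
  forall rho,
  seq_comp_pur (fun r => ttens (@idfun (Mx (b1 + c))) d1 (p1 r))
               (fun r => ttens (@idfun (Mx b2)) d2 (p2 r)) rho =
  ttens (@idfun (Mx (b1 + b2))) (ttens d1 d2) (seq_comp_pur p1 p2 rho).
Proof.
move=> lp1 lp2 ld1 ld2 rho; rewrite /seq_comp_pur.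
have -> : ttens (fun r => ttens (@idfun (Mx (b1 + c))) d1 (p1 r)) (@idfun (Mx a2)) rho =
          ttens (ttens (@idfun (Mx (b1 + c))) d1) (@idfun (Mx a2)) (ttens p1 idfun rho).
  by rewrite ttens_comp; solve_linmap; apply: ttens_ext.
rewrite (natural_assoc (esym (addnA (b1 + c) x1 a2))) // natural_swap //.
rewrite (natural_assoc1 (eq_assoc1 b1 c a2 x1)) // natural_interchange //.
by rewrite (natural_assoc2 (eq_assoc2 b1 b2 x2 x1)) // natural_swap_env.
Qed.

End StringDiagrams.


Section Categories.
Variable C : numClosedFieldType.
Local Notation Mx n := 'M[C]_(2 ^ n).

(* The structural maps are pure: the identity and the casts are conjugations
   by identity matrices, the swap is conjugation by a permutation matrix. *)
Lemma pure_id n : pure (@idfun (Mx n)).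
Proof. by exists 1%:M => rho; rewrite mxadj1 mul1mx mulmx1. Qed.

Lemma pure_qcast n n' (e : n = n') : pure (@qcast C n n' e).
Proof.
by case: n' / e; exists 1%:M => rho; rewrite mxadj1 mul1mx mulmx1 /qcast castmx_id.
Qed.

Definition swapmx a b : 'M[C]_(2 ^ (b + a), 2 ^ (a + b)) :=
  \matrix_(r, c) (r == ti (unti c).2 (unti c).1)%:R.

Lemma sum_ti_delta n m (i : 'I_(2 ^ n)) (k : 'I_(2 ^ m)) (F : 'I_(2 ^ n) -> 'I_(2 ^ m) -> C) :
  \sum_i0 \sum_k0 ((i == i0) && (k == k0))%:R * F i0 k0 = F i k.
Proof.
rewrite (bigD1 i) //= [X in _ + X]big1 ?addr0 => [|i0 hi]; last first.
  by rewrite big1 // => k0 _; rewrite eq_sym (negbTE hi) /= mulr0n mul0r.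
rewrite (bigD1 k) //= [X in _ + X]big1 ?addr0 => [|k0 hk]; last first.
  by rewrite eqxx eq_sym (negbTE hk) /= mulr0n mul0r.
by rewrite !eqxx /= mulr1n mul1r.
Qed.

Lemma swapmx_row a b (M : 'M[C]_(2 ^ (a + b), 2 ^ (a + b))) k i t :
  (swapmx a b *m M) (ti k i) t = M (ti i k) t.
Proof.
rewrite mxE sum_ti -(sum_ti_delta i k (fun i0 k0 => M (ti i0 k0) t)).
apply: eq_bigr=> i0 _; apply: eq_bigr=> k0 _.
by rewrite mxE unti_ti /= eq_ti andbC.
Qed.

Lemma swapmx_col a b (M : 'M[C]_(2 ^ (b + a), 2 ^ (a + b))) r l j :
  (M *m mxadj (swapmx a b)) r (ti l j) = M r (ti j l).
Proof.
rewrite mxE sum_ti -(sum_ti_delta j l (fun j0 l0 => M r (ti j0 l0))).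
apply: eq_bigr=> j0 _; apply: eq_bigr=> l0 _.
by rewrite mxadjE mxE unti_ti /= eq_ti rmorph_nat mulrC andbC.
Qed.

Lemma qswap_conj a b rho : @qswap C a b rho = swapmx a b *m rho *m mxadj (swapmx a b).
Proof.
move: rho; apply: lin_ext; [exact: lin_qswap|exact: lin_conj|] => A B.
rewrite qswap_tens; apply/matrixP=> r s; case: (tiP r)=> k i; case: (tiP s)=> l j.
by rewrite swapmx_col swapmx_row !tens_E mulrC.
Qed.

Record closed_class (M : mor_pred C) : Prop := ClosedClass {
  cl_comp : forall n m k (f : Mx n -> Mx m) (g : Mx m -> Mx k),
        M _ _ f -> M _ _ g -> M _ _ (fun x => g (f x));
  cl_tens : forall n1 m1 n2 m2 (f : Mx n1 -> Mx m1) (g : Mx n2 -> Mx m2),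
        M _ _ f -> M _ _ g -> M _ _ (ttens f g);
  cl_id : forall n, M _ _ (@idfun (Mx n));
  cl_cast : forall n n' (e : n = n'), M _ _ (@qcast C n n' e);
  cl_swap : forall a b, M _ _ (@qswap C a b);
  cl_ext : forall n m (f g : Mx n -> Mx m), M _ _ f -> f =1 g -> M _ _ g }.

Lemma closed_seq_comp_pur (M : mor_pred C) a1 b1 c a2 b2 x1 x2
  (p1 : Mx a1 -> Mx (b1 + c + x1)) (p2 : Mx (c + a2) -> Mx (b2 + x2)) :
  closed_class M -> M _ _ p1 -> M _ _ p2 -> M _ _ (seq_comp_pur p1 p2).
Proof.
case=> hc ht hi hq hs he h1 h2.
have s1 := ht _ _ _ _ _ _ h1 (hi a2).
have s2 := hc _ _ _ _ _ s1 (hq _ _ (esym (addnA (b1 + c) x1 a2))).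
have s3 := hc _ _ _ _ _ s2 (ht _ _ _ _ _ _ (hi (b1 + c)) (hs x1 a2)).
have s4 := hc _ _ _ _ _ s3 (hq _ _ (eq_assoc1 b1 c a2 x1)).
have s5 := hc _ _ _ _ _ s4 (ht _ _ _ _ _ _ (ht _ _ _ _ _ _ (hi b1) h2) (hi x1)).
have s6 := hc _ _ _ _ _ s5 (hq _ _ (eq_assoc2 b1 b2 x2 x1)).
exact: hc _ _ _ _ _ s6 (ht _ _ _ _ _ _ (hi (b1 + b2)) (hs x2 x1)).
Qed.

Lemma closed_pure : closed_class (fun n m f => @pure C n m f).
Proof.
split.
- move=> n m k f g [V eV] [W eW]; exists (W *m V) => rho.
  by rewrite eW eV mxadjM !mulmxA.
- move=> n1 m1 n2 m2 f g [V eV] [W eW]; exists (tensop V W) => rho.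
  by rewrite (ttens_ext eV eW) ttens_conj.
- exact: pure_id.
- exact: pure_qcast.
- by move=> a b; exists (swapmx a b); apply: qswap_conj.
- by move=> n m f g [V eV] e; exists V => rho; rewrite -e.
Qed.

Lemma CPM_ext n m (f g : Mx n -> Mx m) : CPM f -> f =1 g -> CPM g.
Proof.
move=> [lf cf] e; split; first by move=> a x y; rewrite -!e lf.
by move=> k A hA; rewrite -(tmap_ext (frefl idfun) e); apply: cf.
Qed.

Lemma CPM_krausP n m (f : Mx n -> Mx m) :
  CPM f <-> exists (I : finType) (K : I -> 'M[C]_(2 ^ m, 2 ^ n)), f =1 kraus K.
Proof.
split=> [[lf cf]|[I [K eK]]]; first by have [K eK] := choi_kraus lf cf; exists _, K.
by apply: (CPM_ext (CPM_kraus K)) => x; rewrite eK.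
Qed.

Lemma closed_CPM : closed_class (@CPM C).
Proof.
split.
- move=> n m k f g /CPM_krausP [I [K eK]] /CPM_krausP [J [L eL]].
  apply/CPM_krausP; exists _, (fun ij : I * J => L ij.2 *m K ij.1) => rho.
  by rewrite eK eL kraus_comp.
- move=> n1 m1 n2 m2 f g /CPM_krausP [I [K eK]] /CPM_krausP [J [L eL]].
  apply/CPM_krausP; exists _, (fun p : I * J => tensop (K p.1) (L p.2)) => rho.
  by rewrite (ttens_ext eK eL) ttens_kraus.
- by move=> n; apply: (CPM_ext (CPM_conj 1%:M)) => rho; rewrite mxadj1 mul1mx mulmx1.
- by move=> n n' e; have [V eV] := pure_qcast e; apply: (CPM_ext (CPM_conj V)).
- by move=> a b; apply: (CPM_ext (CPM_conj (swapmx a b))) => rho; rewrite qswap_conj.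
- exact: CPM_ext.
Qed.

Lemma disc_tp n m (f : Mx n -> Mx m) : causal f <-> trace_preserving f.
Proof.
split=> h rho; last by rewrite /disc h.
by have /matrixP/(_ 0 0) := h rho; rewrite !mxE.
Qed.

Lemma tp_ttens n1 m1 n2 m2 (f : Mx n1 -> Mx m1) (g : Mx n2 -> Mx m2) :
  linmap f -> linmap g -> trace_preserving f -> trace_preserving g ->
  trace_preserving (ttens f g).
Proof.
move=> lf lg tf tg; apply/disc_tp; apply: lin_ext; solve_linmap => A B.
by rewrite ttens_tens // /disc !tr_tens tf tg.
Qed.

Lemma closed_UCPM : closed_class (@UCPM C).
Proof.
have [c1 c2 c3 c4 c5 c6] := closed_CPM.
split.
- move=> n m k f g [hf tf] [hg tg]; split; first exact: c1.
  by move=> rho; rewrite tg tf.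
- move=> n1 m1 n2 m2 f g [hf tf] [hg tg]; split; first exact: c2.
  by apply: tp_ttens => //; [case: hf|case: hg].
- by move=> n; split.
- by move=> n n' e; split=> // rho; apply: mxtrace_castmx.
- by move=> a b; split=> // rho; apply: tr_qswap.
- move=> n m f g [hf tf] e; split; first exact: c6 hf e.
  by move=> rho; rewrite -e tf.
Qed.

Lemma tr_ptr b y (M : Mx (b + y)) : \tr (ptr M) = \tr M.
Proof. by rewrite /mxtrace [RHS]sum_ti; apply: eq_bigr=> i _; rewrite ptr_E. Qed.

(* Stinespring dilation: every completely positive map is the marginal of a
   pure map, whose environment indexes the Kraus operators. *)
Lemma purify a b (f : Mx a -> Mx b) :
  CPM f -> exists V : 'M[C]_(2 ^ (b + (a + b)), 2 ^ a),
    forall rho, f rho = ptr (V *m rho *m mxadj V).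
Proof.
case=> lf cf; have [K eK] := choi_kraus lf cf.
pose K' (z : 'I_(2 ^ (a + b))) := K (cast_ord (expnD 2 a b) z).
pose V : 'M[C]_(2 ^ (b + (a + b)), 2 ^ a) := \matrix_(r, c) K' (unti r).2 (unti r).1 c.
have blkV z : blk V z = K' z by apply/matrixP=> r c; rewrite !mxE unti_ti.
exists V => rho; apply/matrixP=> i j; rewrite ptr_E eK /kraus summxE.
under [in RHS]eq_bigr => z _ do rewrite blk_prod !blkV.
rewrite (reindex (cast_ord (expnD 2 a b))) //.
by exists (cast_ord (esym (expnD 2 a b))) => z _; [exact: cast_ordK|exact: cast_ordKV].
Qed.

End Categories.


Section PseudoPurification.
Variable C : numClosedFieldType.
Local Notation Mx n := 'M[C]_(2 ^ n).
Variable M : mor_pred C.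
Arguments M : clear implicits.
Hypothesis closedM : closed_class M.
Hypothesis M_CPM : forall n m (f : Mx n -> Mx m), M _ _ f -> CPM f.
Hypothesis M_kraus : forall n m (I : finType) (U : I -> 'M[C]_(2 ^ m, 2 ^ n)),
  \sum_i mxadj (U i) *m U i = 1%:M -> M _ _ (kraus U).
Hypothesis M_dilation : forall a b x (f : Mx a -> Mx b) (V : 'M[C]_(2 ^ (b + x), 2 ^ a)),
  M _ _ f -> (forall rho, f rho = ptr (V *m rho *m mxadj V)) ->
  M _ _ (fun rho => V *m rho *m mxadj V).

Lemma M_linmap n m (f : Mx n -> Mx m) : M _ _ f -> linmap f.
Proof. by case/M_CPM. Qed.

(* A purification in [M] is a pseudo-purification: by [pure_factor] every
   [g] with the same marginal factors through it by a causal Kraus map. *)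
Lemma purification_pseudo a b x (f : Mx a -> Mx b) (p : Mx a -> Mx (b + x)) :
  M _ _ p -> pure p -> (forall rho, f rho = ptr (p rho)) -> pseudo_pur M f p.
Proof.
move=> Mp [V eV] hfp; split=> // y g Mg hfg.
have hgV rho : ptr (g rho) = ptr (V *m rho *m mxadj V) by rewrite -hfg hfp eV.
have [I [U [hU eg]]] := pure_factor (M_CPM Mg) hgV.
exists (kraus U); split; first exact: M_kraus.
split; first by apply/disc_tp => rho; apply: tp_kraus.
by move=> rho; rewrite eg eV.
Qed.

(* Every morphism of [M] has a pseudo-purification: its Stinespring dilation. *)
Lemma pseudo_pur_exists a b (f : Mx a -> Mx b) :
  M _ _ f -> exists x (p : Mx a -> Mx (b + x)), pseudo_pur M f p.
Proof.
move=> Mf; have [V eV] := purify (M_CPM Mf).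
exists (a + b)%N, (fun rho => V *m rho *m mxadj V).
by apply: purification_pseudo; [exact: M_dilation Mf eV|exists V|].
Qed.

Lemma seq_comp_dilation a1 b1 c a2 b2 (f1 : Mx a1 -> Mx (b1 + c)) (f2 : Mx (c + a2) -> Mx b2)
  x1 x2 (V1 : 'M[C]_(2 ^ (b1 + c + x1), 2 ^ a1)) (V2 : 'M[C]_(2 ^ (b2 + x2), 2 ^ (c + a2))) :
  M _ _ f1 -> M _ _ f2 ->
  (forall rho, f1 rho = ptr (V1 *m rho *m mxadj V1)) ->
  (forall rho, f2 rho = ptr (V2 *m rho *m mxadj V2)) ->
  pseudo_pur M (seq_comp f1 f2)
    (seq_comp_pur (fun rho => V1 *m rho *m mxadj V1) (fun rho => V2 *m rho *m mxadj V2)).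
Proof.
move=> Mf1 Mf2 eV1 eV2; apply: purification_pseudo.
- by apply: closed_seq_comp_pur closedM _ _; [exact: M_dilation Mf1 eV1|exact: M_dilation Mf2 eV2].
- have purV1 : pure (fun rho => V1 *m rho *m mxadj V1) by exists V1.
  have purV2 : pure (fun rho => V2 *m rho *m mxadj V2) by exists V2.
  exact: (closed_seq_comp_pur (closed_pure C) purV1 purV2).
- by move=> rho; rewrite ptr_seq_comp_pur; solve_linmap; apply: seq_comp_ext.
Qed.

(* Composition: [g] factors through the composite dilation by some causal
   [c]; each dilation factors through the given pseudo-purification [p_i]
   by a causal [d_i]; by naturality of [seq_comp_pur], [g] factors through
   [seq_comp_pur p1 p2] by the causal [c o (d1 (x) d2)]. *)
Lemma pseudo_pur_seq_comp a1 b1 c a2 b2 x1 x2 (f1 : Mx a1 -> Mx (b1 + c))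
  (f2 : Mx (c + a2) -> Mx b2) (p1 : Mx a1 -> Mx (b1 + c + x1))
  (p2 : Mx (c + a2) -> Mx (b2 + x2)) :
  M _ _ f1 -> M _ _ f2 -> pseudo_pur M f1 p1 -> pseudo_pur M f2 p2 ->
  pseudo_pur M (seq_comp f1 f2) (seq_comp_pur p1 p2).
Proof.
move=> Mf1 Mf2 [Mp1 pp1] [Mp2 pp2]; split; first exact: closed_seq_comp_pur.
move=> y g Mg hg.
have [V1 eV1] := purify (M_CPM Mf1); have [V2 eV2] := purify (M_CPM Mf2).
have [d1 [Md1 [cd1 eP1]]] := pp1 _ _ (M_dilation Mf1 eV1) eV1.
have [d2 [Md2 [cd2 eP2]]] := pp2 _ _ (M_dilation Mf2 eV2) eV2.
have [cc [Mcc [ccc eg]]] := (seq_comp_dilation Mf1 Mf2 eV1 eV2).2 y g Mg hg.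
have lp1 := M_linmap Mp1; have lp2 := M_linmap Mp2.
have ld1 := M_linmap Md1; have ld2 := M_linmap Md2; have lc := M_linmap Mcc.
exists (fun x => cc (ttens d1 d2 x)); split.
  by apply: (cl_comp closedM) => //; apply: (cl_tens closedM).
split.
  move=> rho; rewrite ccc; apply/disc_tp: rho.
  by apply: tp_ttens => //; apply/disc_tp.
move=> rho; rewrite eg (seq_comp_pur_ext eP1 eP2) seq_comp_pur_natural //.
by rewrite ttens_comp; solve_linmap.
Qed.

Lemma pseudo_purifiable_class : pseudo_purifiable M /\ purifications_pseudo M.
Proof.
split; first by split; [exact: pseudo_pur_exists|exact: pseudo_pur_seq_comp].
by move=> a b x f p _ Mp pp hfp; apply: purification_pseudo.
Qed.

End PseudoPurification.

(* CPM and UCPM satisfy the hypotheses of [PseudoPurification]: Kraus maps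
   and conjugations are CP, and a dilation of a trace-preserving map is
   trace-preserving since its marginal is. *)
Theorem lemma6 (R : realType) :
  (pseudo_purifiable (@CPM R[i]) /\ purifications_pseudo (@CPM R[i])) /\
  (pseudo_purifiable (@UCPM R[i]) /\ purifications_pseudo (@UCPM R[i])).
Proof.
split.
  apply: pseudo_purifiable_class (@closed_CPM _) _ _ _ => //.
  - by move=> n m I U _; apply: CPM_kraus.
  - by move=> a b x f V _ _; apply: CPM_conj.
apply: pseudo_purifiable_class (@closed_UCPM _) _ _ _.
- by move=> n m f [].
- by move=> n m I U hU; split; [apply: CPM_kraus|move=> rho; apply: tp_kraus].
- move=> a b x f V [_ tf] eV; split; first exact: CPM_conj.
  by move=> rho; rewrite -tr_ptr -eV tf.
Qed.
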